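(* Let $r\in(0,1)$, $\kappa>0$, $\alpha,\beta\ge0$, and $V_r=[r,1-]\cup\{1+\}$. Let $A^I$ be the operator in $C(V_r)$ whose domain consists of those $f\in C(V_r)$ which, restricted to $[r,1-]$, are twice continuously differentiable and satisfy \[f'(r)=0,\qquad f'(1-)=\beta\,(f(1+)-f(1-)),\] given by $A^If(1+)=-\alpha f(1+)+\alpha f(1-)$ and $A^If(\rho)=\kappa\rho^2f''(\rho)+\kappa\rho f'(\rho)$ for $\rho\in[r,1-]$. Then $A^I$ is a conservative Feller generator in $C(V_r)$.
   Context: $V_r$ is the disjoint union of the interval $[r,1-]$ and an isolated point $1+$ ($1-$, $1+$ are distinct copies of $1$); $C(V_r)$ is the space of continuous functions on $V_r$ with the supremum norm. A conservative Feller generator is the generator of a strongly continuous semigroup of positive operators on $C(V_r)$ fixing the constant function $1$. *)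

From Stdlib Require Import Reals.
From Coquelicot Require Import Coquelicot.
Open Scope R_scope.

(* Points of V_r = [r,1-] (disjoint union) {1+}.
   VL x represents x in [r,1-] (VL 1 is the point 1-), VPlus is 1+.
   Functions on V_r are represented as functions Vpt -> R; only their
   values at points of V_r (see inV) matter. *)
Inductive Vpt : Type := VL (x : R) | VPlus.

Definition Iv (r x : R) : Prop := r <= x <= 1.

Definition inV (r : R) (p : Vpt) : Prop :=
  match p with VL x => Iv r x | VPlus => True end.

Definition cont_on_I (r : R) (g : R -> R) : Prop :=
  forall x, Iv r x -> filterlim g (within (Iv r) (locally x)) (locally (g x)).

(* f belongs to C(V_r): continuous on [r,1-]; 1+ is isolated, so no condition there *)
Definition inC (r : R) (f : Vpt -> R) : Prop := cont_on_I r (fun x => f (VL x)).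

Definition deriv_on_I (r : R) (g dg : R -> R) : Prop :=
  forall x, Iv r x ->
    filterlim (fun y => (g y - g x) / (y - x))
      (within (fun y => Iv r y /\ y <> x) (locally x)) (locally (dg x)).

Definition C2_on_I (r : R) (g g1 g2 : R -> R) : Prop :=
  deriv_on_I r g g1 /\ deriv_on_I r g1 g2 /\ cont_on_I r g1 /\ cont_on_I r g2.

Definition conservative_Feller_semigroup (r : R)
    (T : R -> (Vpt -> R) -> (Vpt -> R)) : Prop :=
  (forall t f, 0 <= t -> inC r f -> inC r (T t f)) /\
  (forall t f g a b, 0 <= t -> inC r f -> inC r g -> forall p, inV r p ->
      T t (fun q => a * f q + b * g q) p = a * T t f p + b * T t g p) /\
  (forall t f, 0 <= t -> inC r f -> (forall p, inV r p -> 0 <= f p) ->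
      forall p, inV r p -> 0 <= T t f p) /\
  (forall t, 0 <= t -> forall p, inV r p -> T t (fun _ => 1) p = 1) /\
  (forall f, inC r f -> forall p, inV r p -> T 0 f p = f p) /\
  (forall s t f, 0 <= s -> 0 <= t -> inC r f -> forall p, inV r p ->
      T (s + t) f p = T s (T t f) p) /\
  (forall f, inC r f -> forall eps, 0 < eps -> exists delta, 0 < delta /\
      forall t, 0 <= t < delta -> forall p, inV r p -> Rabs (T t f p - f p) < eps).

Definition generator_graph (r : R) (T : R -> (Vpt -> R) -> (Vpt -> R))
    (f h : Vpt -> R) : Prop :=
  forall eps, 0 < eps -> exists delta, 0 < delta /\
    forall t, 0 < t < delta -> forall p, inV r p ->
      Rabs ((T t f p - f p) / t - h p) < eps.

(* An operator given by its graph A (A f h means f in D(A), A f = h) is a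
   conservative Feller generator in C(V_r): it is the generator of a
   conservative Feller semigroup (graph equality on C(V_r)). *)
Definition conservative_Feller_generator (r : R)
    (A : (Vpt -> R) -> (Vpt -> R) -> Prop) : Prop :=
  exists T, conservative_Feller_semigroup r T /\
    forall f h, inC r f -> inC r h -> (generator_graph r T f h <-> A f h).

Definition AI (r kappa alpha beta : R) (f h : Vpt -> R) : Prop :=
  inC r f /\
  exists g1 g2 : R -> R,
    C2_on_I r (fun x => f (VL x)) g1 g2 /\
    g1 r = 0 /\
    g1 1 = beta * (f VPlus - f (VL 1)) /\
    h VPlus = - alpha * f VPlus + alpha * f (VL 1) /\
    (forall x, Iv r x -> h (VL x) = kappa * x ^ 2 * g2 x + kappa * x * g1 x).

(** Hille–Yosida for Feller semigroups, specialised to [C(V_r)].  [A^I] satisfies the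
    positive maximum principle (from the boundary conditions), and the resolvent
    equation [u - eta A^I u = g] is solved explicitly: in the variable [ln x] it is a
    constant coefficient second order ODE.  The resolvents [(I - eta A)^-1] are then
    positive contractions fixing [1], and they converge to the identity as [eta -> 0]
    by a Korovkin argument, because the test functions [(x - r)^2], [(x - r)^4] and the
    indicator of [1+] are uniform limits of elements of the domain (correct each by a
    boundary layer at [1-]).  The semigroup is the uniform limit of Euler's
    approximations [(I - 2^-N A)^-floor(t 2^N)], which are Cauchy on [D(A^2)], a dense
    set; its generator satisfies the maximum principle, hence cannot properly extend
    [A], whose resolvent is onto. *)

From Stdlib Require Import Reals Lra Lia ZArith ClassicalEpsilon.
From Coquelicot Require Import Coquelicot.
Open Scope R_scope.

(** * Real analysis on [[r,1]] *)

Lemma filterlim_within_epsilon (P : R -> Prop) (g : R -> R) (x l : R) :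
  filterlim g (within P (locally x)) (locally l) <->
  (forall eps, 0 < eps -> exists d, 0 < d /\
     forall y, P y -> Rabs (y - x) < d -> Rabs (g y - l) < eps).
Proof.
  split.
  - intros H eps He.
    destruct (proj1 (filterlim_locally _ _) H (mkposreal eps He)) as [d Hd].
    exists d; split; [apply cond_pos|].
    intros y Hy Hyx. exact (Hd y Hyx Hy).
  - intros H. apply filterlim_locally. intros eps.
    destruct (H eps (cond_pos eps)) as [d [Hd0 Hd]].
    exists (mkposreal d Hd0). intros y Hy HPy. exact (Hd y HPy Hy).
Qed.

Lemma filterlim_locally_epsilon (g : R -> R) (x l : R) :
  filterlim g (locally x) (locally l) <->
  (forall eps, 0 < eps -> exists d, 0 < d /\
     forall y, Rabs (y - x) < d -> Rabs (g y - l) < eps).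
Proof.
  split.
  - intros H eps He.
    destruct (proj1 (filterlim_locally _ _) H (mkposreal eps He)) as [d Hd].
    exists d; split; [apply cond_pos|]. intros y Hyx. exact (Hd y Hyx).
  - intros H. apply filterlim_locally. intros eps.
    destruct (H eps (cond_pos eps)) as [d [Hd0 Hd]].
    exists (mkposreal d Hd0). intros y Hy. exact (Hd y Hy).
Qed.

Lemma cont_on_I_epsilon (r : R) (g : R -> R) :
  cont_on_I r g <-> forall x, Iv r x -> forall eps, 0 < eps -> exists d, 0 < d /\
     forall y, Iv r y -> Rabs (y - x) < d -> Rabs (g y - g x) < eps.
Proof.
  split; intros H x Hx.
  - apply filterlim_within_epsilon, H, Hx.
  - apply filterlim_within_epsilon, H, Hx.
Qed.

Lemma deriv_on_I_epsilon (r : R) (g dg : R -> R) :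
  deriv_on_I r g dg <-> forall x, Iv r x -> forall eps, 0 < eps -> exists d, 0 < d /\
     forall y, Iv r y -> y <> x -> Rabs (y - x) < d ->
        Rabs ((g y - g x) / (y - x) - dg x) < eps.
Proof.
  split.
  - intros H x Hx eps He.
    destruct (proj1 (filterlim_within_epsilon _ _ _ _) (H x Hx) eps He) as [d [Hd H1]].
    exists d; split; [exact Hd|]. intros y Hy Hne. apply H1; auto.
  - intros H x Hx. apply filterlim_within_epsilon. intros eps He.
    destruct (H x Hx eps He) as [d [Hd H1]].
    exists d; split; [exact Hd|]. intros y [Hy Hne]. apply H1; auto.
Qed.

(** Extends functions on [[r,1]] to [R], so that the Stdlib theorems about
    continuous functions of a real variable apply. *)
Definition clamp (r x : R) : R := Rmax r (Rmin 1 x).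

Lemma clamp_id r x : Iv r x -> clamp r x = x.
Proof.
  unfold clamp, Iv; intros [H1 H2].
  rewrite Rmin_right by lra. rewrite Rmax_right by lra. reflexivity.
Qed.

Lemma clamp_Iv r x : r <= 1 -> Iv r (clamp r x).
Proof.
  unfold clamp, Iv; intros H. split.
  - apply Rmax_l.
  - apply Rmax_lub; [exact H | apply Rmin_l].
Qed.

Lemma clamp_lipschitz r x y : r <= 1 -> Rabs (clamp r x - clamp r y) <= Rabs (x - y).
Proof.
  intros H. unfold clamp, Rmax, Rmin.
  repeat destruct Rle_dec; unfold Rabs; repeat destruct Rcase_abs; lra.
Qed.

Lemma continuous_clamp r (g : R -> R) : r <= 1 -> cont_on_I r g ->
  forall x, continuous (fun y => g (clamp r y)) x.
Proof.
  intros Hr Hc x. apply filterlim_locally_epsilon. intros eps He.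
  destruct (proj1 (cont_on_I_epsilon r g) Hc (clamp r x) (clamp_Iv r x Hr) eps He)
    as [d [Hd H1]].
  exists d; split; [exact Hd|]. intros y Hy. apply H1; [apply clamp_Iv; exact Hr|].
  eapply Rle_lt_trans; [apply clamp_lipschitz; exact Hr | exact Hy].
Qed.

Lemma continuity_pt_clamp r (g : R -> R) : r <= 1 -> cont_on_I r g ->
  forall x, continuity_pt (fun y => g (clamp r y)) x.
Proof. intros Hr Hc x. apply continuity_pt_filterlim, continuous_clamp; assumption. Qed.

Lemma cont_on_I_ext r (g g' : R -> R) : (forall x, Iv r x -> g x = g' x) ->
  cont_on_I r g -> cont_on_I r g'.
Proof.
  intros He Hc. apply cont_on_I_epsilon. intros x Hx eps Heps.
  destruct (proj1 (cont_on_I_epsilon r g) Hc x Hx eps Heps) as [d [Hd H1]].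
  exists d; split; [exact Hd|]. intros y Hy Hyx. rewrite <- !He; auto.
Qed.

Lemma cont_on_I_plus r (g g' : R -> R) : cont_on_I r g -> cont_on_I r g' ->
  cont_on_I r (fun x => g x + g' x).
Proof.
  intros H1 H2 x Hx. eapply filterlim_comp_2; [apply H1, Hx | apply H2, Hx |].
  apply (filterlim_plus (g x) (g' x)).
Qed.

Lemma cont_on_I_mult r (g g' : R -> R) : cont_on_I r g -> cont_on_I r g' ->
  cont_on_I r (fun x => g x * g' x).
Proof.
  intros H1 H2 x Hx. eapply filterlim_comp_2; [apply H1, Hx | apply H2, Hx |].
  apply (filterlim_mult (g x) (g' x)).
Qed.

Lemma cont_on_I_const r c : cont_on_I r (fun _ => c).
Proof. intros x Hx. apply filterlim_const. Qed.

Lemma cont_on_I_id r : cont_on_I r (fun x => x).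
Proof.
  apply cont_on_I_epsilon. intros x Hx eps He. exists eps; split; auto.
Qed.

Lemma filterlim_lin_comb {T} (F : (T -> Prop) -> Prop) {FF : Filter F} (f g : T -> R)
  (l m a b : R) :
  filterlim f F (locally l) -> filterlim g F (locally m) ->
  filterlim (fun y => a * f y + b * g y) F (locally (a * l + b * m)).
Proof.
  intros Hf Hg.
  eapply filterlim_comp_2; [| | apply (filterlim_plus (a * l) (b * m))].
  - eapply filterlim_comp_2; [apply filterlim_const | exact Hf | apply (filterlim_mult a l)].
  - eapply filterlim_comp_2; [apply filterlim_const | exact Hg | apply (filterlim_mult b m)].
Qed.

Lemma cont_on_I_lin r (g g' : R -> R) a b : cont_on_I r g -> cont_on_I r g' ->
  cont_on_I r (fun x => a * g x + b * g' x).
Proof. intros H1 H2 x Hx. exact (filterlim_lin_comb _ _ _ _ _ a b (H1 x Hx) (H2 x Hx)). Qed.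

Lemma cont_on_I_of_continuous r (g : R -> R) :
  (forall x, Iv r x -> continuous g x) -> cont_on_I r g.
Proof.
  intros H x Hx. eapply filterlim_filter_le_1; [apply filter_le_within | apply H, Hx].
Qed.

Lemma cont_on_I_of_ex_derive r (g : R -> R) : (forall x, Iv r x -> ex_derive g x) -> cont_on_I r g.
Proof.
  intros H. apply cont_on_I_of_continuous. intros x Hx.
  exact (@ex_derive_continuous R_AbsRing R_NormedModule g x (H x Hx)).
Qed.

Lemma deriv_on_I_cont r (g dg : R -> R) : deriv_on_I r g dg -> cont_on_I r g.
Proof.
  intros Hd. apply cont_on_I_epsilon. intros x Hx eps He.
  destruct (proj1 (deriv_on_I_epsilon r g dg) Hd x Hx 1 Rlt_0_1) as [d [Hd0 H1]].
  set (L := Rabs (dg x) + 1).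
  assert (HL : 0 < L) by (unfold L; pose proof (Rabs_pos (dg x)); lra).
  exists (Rmin d (eps / L)). split; [apply Rmin_pos; [exact Hd0 | apply Rdiv_lt_0_compat; lra]|].
  intros y Hy Hyx.
  destruct (Req_dec y x) as [->|Hne].
  { rewrite Rminus_diag, Rabs_R0; exact He. }
  assert (Hq := H1 y Hy Hne (Rlt_le_trans _ _ _ Hyx (Rmin_l _ _))).
  assert (Hyx2 := Rlt_le_trans _ _ _ Hyx (Rmin_r _ _)).
  assert (HqL : Rabs ((g y - g x) / (y - x)) < L).
  { unfold L. revert Hq. generalize ((g y - g x) / (y - x)). intros q Hq.
    unfold Rabs in *; repeat destruct Rcase_abs; lra. }
  replace (g y - g x) with (((g y - g x) / (y - x)) * (y - x)) by (field; lra).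
  rewrite Rabs_mult.
  apply Rle_lt_trans with (L * Rabs (y - x)).
  { apply Rmult_le_compat_r; [apply Rabs_pos | lra]. }
  apply Rlt_le_trans with (L * (eps / L)); [apply Rmult_lt_compat_l; lra|].
  right; field; lra.
Qed.

Lemma deriv_on_I_of_is_derive r (g dg : R -> R) :
  (forall x, Iv r x -> is_derive g x (dg x)) -> deriv_on_I r g dg.
Proof.
  intros H. apply deriv_on_I_epsilon. intros x Hx eps He.
  destruct (proj1 (is_derive_Reals g x (dg x)) (H x Hx) eps He) as [d Hd].
  exists d; split; [apply cond_pos|]. intros y _ Hne Hyx.
  specialize (Hd (y - x) ltac:(lra) Hyx). replace (x + (y - x)) with y in Hd by ring.
  exact Hd.
Qed.

Lemma locally_Iv r x : r < x < 1 -> locally x (Iv r).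
Proof.
  intros Hx. assert (He : 0 < Rmin (x - r) (1 - x)) by (apply Rmin_pos; lra).
  exists (mkposreal _ He). intros y Hy. change (Rabs (y - x) < Rmin (x - r) (1 - x)) in Hy.
  pose proof (Rmin_l (x - r) (1 - x)). pose proof (Rmin_r (x - r) (1 - x)).
  unfold Iv, Rabs in *. destruct Rcase_abs; lra.
Qed.

Lemma is_derive_of_deriv_on_I r (g dg : R -> R) x : deriv_on_I r g dg -> r < x < 1 ->
  is_derive g x (dg x).
Proof.
  intros Hd Hx. apply is_derive_Reals. intros eps He.
  destruct (proj1 (deriv_on_I_epsilon r g dg) Hd x ltac:(unfold Iv; lra) eps He)
    as [d [Hd0 H1]].
  destruct (locally_Iv r x Hx) as [e He'].
  assert (Hm : 0 < Rmin d e) by (apply Rmin_pos; [exact Hd0 | apply cond_pos]).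
  exists (mkposreal _ Hm). intros h Hh0 Hh. simpl in Hh.
  specialize (H1 (x + h)). replace (x + h - x) with h in H1 by ring.
  apply H1; [| lra | eapply Rlt_le_trans; [exact Hh | apply Rmin_l]].
  apply He'. change (Rabs (x + h - x) < e). replace (x + h - x) with h by ring.
  eapply Rlt_le_trans; [exact Hh | apply Rmin_r].
Qed.

Lemma MVT_on_I r (g dg : R -> R) a b : deriv_on_I r g dg -> r <= a -> a < b -> b <= 1 ->
  exists c, a <= c <= b /\ g b - g a = dg c * (b - a).
Proof.
  intros Hd Ha Hab Hb.
  destruct (MVT_gen (fun y => g (clamp r y)) a b dg) as [c [Hc Heq]].
  - rewrite Rmin_left, Rmax_right by lra. intros x Hx.
    apply (is_derive_ext_loc g).
    + apply (filter_imp (Iv r)); [| apply locally_Iv; lra].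
      intros y Hy. rewrite clamp_id by exact Hy. reflexivity.
    + apply (is_derive_of_deriv_on_I r); [exact Hd | lra].
  - intros x _. apply continuity_pt_clamp; [lra | eapply deriv_on_I_cont; eauto].
  - rewrite Rmin_left, Rmax_right in Hc by lra.
    exists c; split; [exact Hc|]. rewrite !clamp_id in Heq by (unfold Iv; lra). exact Heq.
Qed.

Lemma deriv_on_I_ext r (g g' dg dg' : R -> R) : (forall x, Iv r x -> g x = g' x) ->
  (forall x, Iv r x -> dg x = dg' x) -> deriv_on_I r g dg -> deriv_on_I r g' dg'.
Proof.
  intros E1 E2 H. apply deriv_on_I_epsilon. intros x Hx eps He.
  destruct (proj1 (deriv_on_I_epsilon r g dg) H x Hx eps He) as [d [Hd H1]].
  exists d; split; [exact Hd|]. intros y Hy Hne Hyx. rewrite <- !E1, <- E2; auto.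
Qed.

Lemma deriv_on_I_lin r (g g' dg dg' : R -> R) a b :
  deriv_on_I r g dg -> deriv_on_I r g' dg' ->
  deriv_on_I r (fun x => a * g x + b * g' x) (fun x => a * dg x + b * dg' x).
Proof.
  intros H1 H2 x Hx.
  eapply filterlim_ext_loc; [| exact (filterlim_lin_comb _ _ _ _ _ a b (H1 x Hx) (H2 x Hx))].
  unfold within. apply filter_forall. intros y [_ Hne]. field. lra.
Qed.

Lemma deriv_on_I_const r c : deriv_on_I r (fun _ => c) (fun _ => 0).
Proof.
  intros x Hx. eapply filterlim_ext_loc; [| apply filterlim_const].
  unfold within. apply filter_forall. intros y [_ Hne]. field. lra.
Qed.

Lemma deriv_nonpos_at_max r (g dg : R -> R) x : deriv_on_I r g dg -> Iv r x -> x < 1 ->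
  (forall y, Iv r y -> g y <= g x) -> dg x <= 0.
Proof.
  intros Hd Hx Hx1 Hmax.
  destruct (Rle_dec (dg x) 0) as [|Hgt]; [assumption | exfalso].
  destruct (proj1 (deriv_on_I_epsilon r g dg) Hd x Hx (dg x / 2) ltac:(lra)) as [d [Hd0 H1]].
  set (y := x + Rmin (d / 2) ((1 - x) / 2)).
  pose proof (Rmin_l (d / 2) ((1 - x) / 2)). pose proof (Rmin_r (d / 2) ((1 - x) / 2)).
  assert (0 < Rmin (d / 2) ((1 - x) / 2)) by (apply Rmin_pos; lra).
  assert (Hy : Iv r y) by (unfold y, Iv in *; lra).
  specialize (H1 y Hy ltac:(unfold y; lra) ltac:(unfold y; rewrite Rabs_right; lra)).
  apply Rabs_def2 in H1. specialize (Hmax y Hy).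
  assert (Hyx : 0 < y - x) by (unfold y; lra).
  assert (0 < (g y - g x) / (y - x) * (y - x)) by (apply Rmult_lt_0_compat; lra).
  replace ((g y - g x) / (y - x) * (y - x)) with (g y - g x) in * by (field; lra).
  lra.
Qed.

Lemma deriv_nonneg_at_max r (g dg : R -> R) x : deriv_on_I r g dg -> Iv r x -> r < x ->
  (forall y, Iv r y -> g y <= g x) -> 0 <= dg x.
Proof.
  intros Hd Hx Hx1 Hmax.
  destruct (Rle_dec 0 (dg x)) as [|Hgt]; [assumption | exfalso].
  destruct (proj1 (deriv_on_I_epsilon r g dg) Hd x Hx (- dg x / 2) ltac:(lra)) as [d [Hd0 H1]].
  set (y := x - Rmin (d / 2) ((x - r) / 2)).
  pose proof (Rmin_l (d / 2) ((x - r) / 2)). pose proof (Rmin_r (d / 2) ((x - r) / 2)).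
  assert (0 < Rmin (d / 2) ((x - r) / 2)) by (apply Rmin_pos; lra).
  assert (Hy : Iv r y) by (unfold y, Iv in *; lra).
  specialize (H1 y Hy ltac:(unfold y; lra) ltac:(unfold y; rewrite Rabs_left; lra)).
  apply Rabs_def2 in H1. specialize (Hmax y Hy).
  assert (Hyx : 0 < x - y) by (unfold y; lra).
  assert (0 < - ((g y - g x) / (y - x)) * (x - y)) by (apply Rmult_lt_0_compat; lra).
  replace (- ((g y - g x) / (y - x)) * (x - y)) with (g y - g x) in * by (field; lra).
  lra.
Qed.

Lemma second_deriv_nonpos_at_max r (g g1 g2 : R -> R) x : C2_on_I r g g1 g2 ->
  Iv r x -> x < 1 -> g1 x = 0 -> (forall y, Iv r y -> g y <= g x) -> g2 x <= 0.
Proof.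
  intros [Hd1 [Hd2 [_ Hc2]]] Hx Hx1 Hg1 Hmax.
  destruct (Rle_dec (g2 x) 0) as [|Hgt]; [assumption | exfalso].
  destruct (proj1 (cont_on_I_epsilon r g2) Hc2 x Hx (g2 x / 2) ltac:(lra)) as [d [Hd0 H1]].
  set (b := x + Rmin (d / 2) ((1 - x) / 2)).
  pose proof (Rmin_l (d / 2) ((1 - x) / 2)). pose proof (Rmin_r (d / 2) ((1 - x) / 2)).
  assert (0 < Rmin (d / 2) ((1 - x) / 2)) by (apply Rmin_pos; lra).
  unfold Iv in Hx.
  assert (Hpos2 : forall c, x <= c <= b -> 0 < g2 c).
  { intros c Hc. assert (Hc' : Iv r c) by (unfold Iv, b in *; lra).
    specialize (H1 c Hc' ltac:(unfold b in Hc; rewrite Rabs_right; lra)).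
    apply Rabs_def2 in H1. lra. }
  assert (Hpos1 : forall y, x < y <= b -> 0 < g1 y).
  { intros y Hy. destruct (MVT_on_I r g1 g2 x y Hd2) as [c [Hc Heq]]; try lra.
    { unfold b in Hy; lra. }
    assert (0 < g2 c * (y - x)) by (apply Rmult_lt_0_compat; [apply Hpos2 | ]; lra). lra. }
  set (m := (x + b) / 2).
  destruct (MVT_on_I r g g1 x m Hd1) as [c [Hc Heq]]; try (unfold m, b in *; lra).
  destruct (MVT_on_I r g g1 m b Hd1) as [c' [Hc' Heq']]; try (unfold m, b in *; lra).
  assert (0 <= g1 c).
  { destruct (Req_dec c x) as [->|Hne]; [lra|]. left. apply Hpos1. unfold m, b in *; lra. }
  assert (0 < g1 c') by (apply Hpos1; unfold m, b in *; lra).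
  assert (0 <= g1 c * (m - x)) by (apply Rmult_le_pos; unfold m, b in *; lra).
  assert (0 < g1 c' * (b - m)) by (apply Rmult_lt_0_compat; unfold m, b in *; lra).
  specialize (Hmax b ltac:(unfold Iv, b in *; lra)). lra.
Qed.

Lemma second_deriv_nonpos_at_max_1 r (g g1 g2 : R -> R) : r < 1 -> C2_on_I r g g1 g2 ->
  g1 1 = 0 -> (forall y, Iv r y -> g y <= g 1) -> g2 1 <= 0.
Proof.
  intros Hr [Hd1 [Hd2 [_ Hc2]]] Hg1 Hmax.
  destruct (Rle_dec (g2 1) 0) as [|Hgt]; [assumption | exfalso].
  destruct (proj1 (cont_on_I_epsilon r g2) Hc2 1 ltac:(unfold Iv; lra) (g2 1 / 2) ltac:(lra))
    as [d [Hd0 H1]].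
  set (a := 1 - Rmin (d / 2) ((1 - r) / 2)).
  pose proof (Rmin_l (d / 2) ((1 - r) / 2)). pose proof (Rmin_r (d / 2) ((1 - r) / 2)).
  assert (0 < Rmin (d / 2) ((1 - r) / 2)) by (apply Rmin_pos; lra).
  assert (Hpos2 : forall c, a <= c <= 1 -> 0 < g2 c).
  { intros c Hc. assert (Hc' : Iv r c) by (unfold Iv, a in *; lra).
    specialize (H1 c Hc' ltac:(unfold a in Hc; rewrite Rabs_left1; lra)).
    apply Rabs_def2 in H1. lra. }
  assert (Hneg1 : forall y, a <= y < 1 -> g1 y < 0).
  { intros y Hy. destruct (MVT_on_I r g1 g2 y 1 Hd2) as [c [Hc Heq]]; try (unfold a in *; lra).
    assert (0 < g2 c * (1 - y)) by (apply Rmult_lt_0_compat; [apply Hpos2 |]; lra). lra. }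
  set (m := (a + 1) / 2).
  destruct (MVT_on_I r g g1 a m Hd1) as [c [Hc Heq]]; try (unfold m, a in *; lra).
  destruct (MVT_on_I r g g1 m 1 Hd1) as [c' [Hc' Heq']]; try (unfold m, a in *; lra).
  assert (g1 c < 0) by (apply Hneg1; unfold m, a in *; lra).
  assert (g1 c' <= 0).
  { destruct (Req_dec c' 1) as [->|Hne]; [lra|]. left. apply Hneg1. unfold m, a in *; lra. }
  assert (g1 c * (m - a) < 0).
  { assert (0 < m - a) by (unfold m, a in *; lra). nra. }
  assert (g1 c' * (1 - m) <= 0).
  { assert (0 < 1 - m) by (unfold m, a in *; lra). nra. }
  specialize (Hmax a ltac:(unfold Iv, a in *; lra)). lra.
Qed.

(** * The space [C(V_r)] *)

Definition eq_on_V (r : R) (f g : Vpt -> R) : Prop := forall p, inV r p -> f p = g p.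

Definition bounded_by (r : R) (f : Vpt -> R) (M : R) : Prop :=
  forall p, inV r p -> Rabs (f p) <= M.

Lemma bounded_by_nonneg r f M : bounded_by r f M -> 0 <= M.
Proof. intros H. specialize (H VPlus I). pose proof (Rabs_pos (f VPlus)); lra. Qed.

Lemma inC_lin r f g a b : inC r f -> inC r g -> inC r (fun p => a * f p + b * g p).
Proof. exact (cont_on_I_lin r _ _ a b). Qed.

Lemma inC_const r c : inC r (fun _ => c).
Proof. exact (cont_on_I_const r c). Qed.

Lemma inC_ext r f g : eq_on_V r f g -> inC r f -> inC r g.
Proof. intros He. apply cont_on_I_ext. intros x Hx. exact (He (VL x) Hx). Qed.

Lemma inC_attains_max r f : r <= 1 -> inC r f ->
  exists p, inV r p /\ forall q, inV r q -> f q <= f p.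
Proof.
  intros Hr Hc.
  destruct (continuity_ab_maj (fun y => f (VL (clamp r y))) r 1 Hr) as [x [Hx1 Hx2]].
  { intros c _. exact (continuity_pt_clamp r (fun y => f (VL y)) Hr Hc c). }
  assert (Hle : forall y, Iv r y -> f (VL y) <= f (VL (clamp r x))).
  { intros y Hy. specialize (Hx1 y Hy). rewrite clamp_id in Hx1 by exact Hy. exact Hx1. }
  destruct (Rle_dec (f VPlus) (f (VL (clamp r x)))) as [Hp|Hp].
  - exists (VL (clamp r x)). split; [apply clamp_Iv, Hr|].
    intros [y|] Hq; [apply Hle, Hq | exact Hp].
  - exists VPlus. split; [exact I|].
    intros [y|] Hq; [specialize (Hle y Hq); lra | lra].
Qed.

Lemma inC_attains_min r f : r <= 1 -> inC r f ->
  exists p, inV r p /\ forall q, inV r q -> f p <= f q.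
Proof.
  intros Hr Hc. destruct (inC_attains_max r (fun p => -1 * f p + 0 * f p) Hr) as [p [Hp H]].
  { apply inC_lin; assumption. }
  exists p; split; [exact Hp|]. intros q Hq. specialize (H q Hq). lra.
Qed.

Lemma inC_bounded r f : r <= 1 -> inC r f -> exists M, 0 <= M /\ bounded_by r f M.
Proof.
  intros Hr Hc. destruct (inC_attains_max r f Hr Hc) as [p [Hp H1]].
  destruct (inC_attains_min r f Hr Hc) as [q [Hq H2]].
  exists (Rabs (f p) + Rabs (f q)). split.
  { pose proof (Rabs_pos (f p)); pose proof (Rabs_pos (f q)); lra. }
  intros s Hs. specialize (H1 s Hs). specialize (H2 s Hs).
  unfold Rabs; repeat destruct Rcase_abs; lra.
Qed.

Lemma inC_unif_cont r f : r <= 1 -> inC r f -> forall eps, 0 < eps -> exists d, 0 < d /\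
  forall x y, Iv r x -> Iv r y -> Rabs (x - y) < d -> Rabs (f (VL x) - f (VL y)) < eps.
Proof.
  intros Hr Hc eps He.
  destruct (Heine (fun y => f (VL (clamp r y))) (Iv r) (compact_P3 r 1)
             (fun c _ => continuity_pt_clamp r (fun y => f (VL y)) Hr Hc c)
             (mkposreal eps He)) as [d Hd].
  exists d; split; [apply cond_pos|].
  intros x y Hx Hy Hxy. specialize (Hd x y Hx Hy Hxy). simpl in Hd.
  rewrite !clamp_id in Hd by assumption. exact Hd.
Qed.

Lemma inC_unif_limit r (F : nat -> Vpt -> R) f : (forall n, inC r (F n)) ->
  (forall eps, 0 < eps -> exists N, forall n p, (N <= n)%nat -> inV r p ->
     Rabs (F n p - f p) <= eps) ->
  inC r f.
Proof.
  intros HC HU. apply cont_on_I_epsilon. intros x Hx eps He.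
  destruct (HU (eps / 4)) as [N HN]; [lra|].
  destruct (proj1 (cont_on_I_epsilon r _) (HC N) x Hx (eps / 4)) as [d [Hd H1]]; [lra|].
  exists d; split; [exact Hd|]. intros y Hy Hyx.
  specialize (H1 y Hy Hyx).
  pose proof (HN N (VL y) (le_n _) Hy) as A1. pose proof (HN N (VL x) (le_n _) Hx) as A2.
  revert H1 A1 A2. generalize (F N (VL y)) (F N (VL x)) (f (VL y)) (f (VL x)).
  intros a b c e H1 A1 A2. unfold Rabs in *; repeat destruct Rcase_abs; lra.
Qed.

(** * Estimates, limits and the dyadic time grid *)

Lemma eq_of_dist_le_eps (x y : R) : (forall eps, 0 < eps -> Rabs (x - y) <= eps) -> x = y.
Proof.
  intros H. destruct (Req_dec x y) as [|Hne]; [assumption | exfalso].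
  assert (Hp : 0 < Rabs (x - y)) by (apply Rabs_pos_lt; lra).
  specialize (H (Rabs (x - y) / 2) ltac:(lra)). lra.
Qed.

Lemma mul_lt_of_lt_div_succ x M e : 0 <= M -> 0 < e -> 0 <= x < e / (M + 1) -> x * M < e.
Proof.
  intros HM He Hx. apply Rle_lt_trans with (x * (M + 1)); [nra|].
  apply Rlt_le_trans with (e / (M + 1) * (M + 1));
    [apply Rmult_lt_compat_r; lra | right; field; lra].
Qed.

Lemma is_lim_seq_dist_le (u : nat -> R) (l c M : R) :
  is_lim_seq u l -> (forall n, Rabs (u n - c) <= M) -> Rabs (l - c) <= M.
Proof.
  intros Hl Hu. apply Rabs_le_between'.
  assert (Hu' : forall n, c - M <= u n <= c + M) by (intros n; apply Rabs_le_between', Hu).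
  split.
  - apply (is_lim_seq_le (fun _ => c - M) u (c - M) l);
      [apply Hu' | apply is_lim_seq_const | exact Hl].
  - apply (is_lim_seq_le u (fun _ => c + M) l (c + M));
      [apply Hu' | exact Hl | apply is_lim_seq_const].
Qed.

Definition nat_floor (x : R) : nat := Z.to_nat (floor x).

Lemma nat_floor_spec x : 0 <= x -> INR (nat_floor x) <= x < INR (nat_floor x) + 1.
Proof.
  intros Hx. unfold nat_floor, floor. destruct (floor_ex x) as [z Hz]. simpl.
  assert (0 <= z)%Z.
  { assert (-1 < z)%Z by (apply lt_IZR; simpl; lra). lia. }
  rewrite INR_IZR_INZ, Z2Nat.id by lia. exact Hz.
Qed.

Lemma nat_floor_unique x n : INR n <= x < INR n + 1 -> nat_floor x = n.
Proof.
  intros Hn. assert (Hx : 0 <= x) by (pose proof (pos_INR n); lra).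
  pose proof (nat_floor_spec x Hx) as Hm.
  destruct (Nat.lt_trichotomy (nat_floor x) n) as [H|[H|H]]; [exfalso | exact H | exfalso].
  - assert (INR (S (nat_floor x)) <= INR n) by (apply le_INR; lia). rewrite S_INR in *. lra.
  - assert (INR (S n) <= INR (nat_floor x)) by (apply le_INR; lia). rewrite S_INR in *. lra.
Qed.

Definition mesh (N : nat) : R := (/ 2) ^ N.
Definition steps (N : nat) (t : R) : nat := nat_floor (t * 2 ^ N).

Lemma mesh_pos N : 0 < mesh N.
Proof. apply pow_lt. lra. Qed.

Lemma mesh_S N : mesh (S N) = mesh N / 2.
Proof. unfold mesh. simpl. field. Qed.

Lemma mesh_lim : is_lim_seq mesh 0.
Proof. apply is_lim_seq_geom. rewrite Rabs_pos_eq; lra. Qed.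

Lemma mesh_small eps : 0 < eps -> exists N0, forall N, (N0 <= N)%nat -> mesh N < eps.
Proof.
  intros He. destruct (proj2 (is_lim_seq_spec mesh 0) mesh_lim (mkposreal eps He)) as [N0 HN].
  exists N0. intros N HN'. specialize (HN N HN'). simpl in HN.
  rewrite Rminus_0_r, Rabs_pos_eq in HN by (left; apply mesh_pos). exact HN.
Qed.

Lemma steps_spec N t : 0 <= t ->
  INR (steps N t) * mesh N <= t < (INR (steps N t) + 1) * mesh N.
Proof.
  intros Ht. unfold steps.
  assert (H2 : 0 < 2 ^ N) by (apply pow_lt; lra).
  assert (Hm : mesh N * 2 ^ N = 1).
  { unfold mesh. rewrite <- Rpow_mult_distr. replace (/ 2 * 2) with 1 by field. apply pow1. }
  destruct (nat_floor_spec (t * 2 ^ N)) as [H1 H3]; [apply Rmult_le_pos; lra|].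
  set (m := nat_floor (t * 2 ^ N)) in *.
  assert (Et : t * 2 ^ N * mesh N = t) by (rewrite Rmult_assoc, (Rmult_comm (2 ^ N)), Hm; ring).
  pose proof (mesh_pos N). rewrite <- Et. split.
  - apply Rmult_le_compat_r; lra.
  - apply Rmult_lt_compat_r; lra.
Qed.

Lemma steps_0 N : steps N 0 = O.
Proof. unfold steps. apply nat_floor_unique. simpl. lra. Qed.

Lemma steps_S N t : 0 <= t ->
  steps (S N) t = (2 * steps N t)%nat \/ steps (S N) t = S (2 * steps N t).
Proof.
  intros Ht. unfold steps. assert (H2 : 0 < 2 ^ N) by (apply pow_lt; lra).
  destruct (nat_floor_spec (t * 2 ^ N)) as [H1 H3]; [apply Rmult_le_pos; lra|].
  set (m := nat_floor (t * 2 ^ N)) in *.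
  replace (t * 2 ^ S N) with (2 * (t * 2 ^ N)) by (simpl; ring).
  destruct (Rlt_dec (2 * (t * 2 ^ N)) (INR (2 * m) + 1)); [left | right];
    apply nat_floor_unique; rewrite ?S_INR, mult_INR in *; simpl INR in *; lra.
Qed.

Lemma steps_add N s t : 0 <= s -> 0 <= t ->
  steps N (s + t) = (steps N s + steps N t)%nat \/ steps N (s + t) = S (steps N s + steps N t).
Proof.
  intros Hs Ht. unfold steps. assert (H2 : 0 < 2 ^ N) by (apply pow_lt; lra).
  destruct (nat_floor_spec (s * 2 ^ N)) as [H1 H3]; [apply Rmult_le_pos; lra|].
  destruct (nat_floor_spec (t * 2 ^ N)) as [H4 H5]; [apply Rmult_le_pos; lra|].
  set (a := nat_floor (s * 2 ^ N)) in *. set (b := nat_floor (t * 2 ^ N)) in *.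
  destruct (Rlt_dec ((s + t) * 2 ^ N) (INR (a + b) + 1)); [left | right];
    apply nat_floor_unique; rewrite ?S_INR, plus_INR in *; lra.
Qed.

Lemma grid_time_lim t : 0 <= t -> is_lim_seq (fun N => INR (steps N t) * mesh N) t.
Proof.
  intros Ht. apply (is_lim_seq_le_le (fun N => t - mesh N) _ (fun _ => t)).
  - intros N. pose proof (steps_spec N t Ht). lra.
  - replace (Finite t) with (Finite (t - 0)) by (f_equal; ring).
    apply is_lim_seq_minus'; [apply is_lim_seq_const | apply mesh_lim].
  - apply is_lim_seq_const.
Qed.

(** * Korovkin test functions *)

Definition shifted_pow (r : R) (n : nat) (p : Vpt) : R :=
  match p with VL x => (x - r) ^ n | VPlus => 0 end.
Definition ind_plus (p : Vpt) : R := match p with VL _ => 0 | VPlus => 1 end.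

Lemma shifted_pow_inC r n : inC r (shifted_pow r n).
Proof. apply cont_on_I_of_ex_derive. intros x _. simpl. auto_derive. exact I. Qed.

Lemma ind_plus_inC r : inC r ind_plus.
Proof. exact (cont_on_I_const r 0). Qed.

(** For [p0] in [V_r], [sep r p0] is a combination of the test functions that
    vanishes at [p0] and is bounded below away from [p0]. *)
Definition sep (r : R) (p0 p : Vpt) : R :=
  match p0 with
  | VL x0 => (shifted_pow r 2 p - (x0 - r) ^ 2) ^ 2 + ind_plus p
  | VPlus => 1 - ind_plus p
  end.

Lemma sep_inC r p0 : inC r (sep r p0).
Proof. apply cont_on_I_of_ex_derive. intros x _. destruct p0; simpl; auto_derive; exact I. Qed.

Lemma sep_nonneg r p0 p : 0 <= sep r p0 p.
Proof.
  destruct p0, p; simpl; try lra; apply Rplus_le_le_0_compat; try lra; apply pow2_ge_0.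
Qed.

Lemma sep_far r d x0 x : 0 < d -> Iv r x0 -> Iv r x -> d <= Rabs (x - x0) ->
  d ^ 4 <= sep r (VL x0) (VL x).
Proof.
  intros Hd Hx0 Hx Hdist. unfold Iv in *. unfold sep, shifted_pow, ind_plus.
  assert (Hsum : Rabs (x - x0) <= x + x0 - 2 * r) by (unfold Rabs; destruct Rcase_abs; lra).
  replace (((x - r) ^ 2 - (x0 - r) ^ 2) ^ 2 + 0)
    with (Rabs (x - x0) ^ 2 * (x + x0 - 2 * r) ^ 2) by (rewrite pow2_abs; ring).
  replace (d ^ 4) with (d ^ 2 * d ^ 2) by ring.
  apply Rmult_le_compat; try apply pow2_ge_0; apply pow_incr; lra.
Qed.

Lemma sep_dominates r g : r <= 1 -> inC r g -> forall eps, 0 < eps -> exists K, 0 <= K /\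
  forall p0 p, inV r p0 -> inV r p -> Rabs (g p - g p0) <= eps + K * sep r p0 p.
Proof.
  intros Hr Hg eps He.
  destruct (inC_bounded r g Hr Hg) as [M [HM Hb]].
  destruct (inC_unif_cont r g Hr Hg eps He) as [d0 [Hd0 Huc]].
  set (d := Rmin d0 1).
  assert (Hd : 0 < d) by (apply Rmin_pos; lra).
  assert (Hd1 : d <= 1) by apply Rmin_r.
  assert (Hd4 : 0 < d ^ 4) by (apply pow_lt; lra).
  assert (Hd41 : d ^ 4 <= 1) by (rewrite <- (pow1 4); apply pow_incr; lra).
  set (K := 2 * M / d ^ 4).
  assert (HK : 0 <= K) by (apply Rdiv_le_0_compat; lra).
  exists K. split; [exact HK|].
  assert (Hsep : forall p0 p, 0 <= K * sep r p0 p)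
    by (intros; apply Rmult_le_pos; [exact HK | apply sep_nonneg]).
  assert (Hfar : forall p0 p, inV r p0 -> inV r p -> d ^ 4 <= sep r p0 p ->
                   Rabs (g p - g p0) <= eps + K * sep r p0 p).
  { intros p0 p Hp0 Hp Hs.
    assert (Rabs (g p - g p0) <= 2 * M).
    { unfold Rminus. eapply Rle_trans; [apply Rabs_triang|]. rewrite Rabs_Ropp.
      pose proof (Hb p Hp). pose proof (Hb p0 Hp0). lra. }
    assert (2 * M <= K * sep r p0 p).
    { replace (2 * M) with (K * d ^ 4) by (unfold K; field; lra).
      apply Rmult_le_compat_l; assumption. }
    lra. }
  intros [x0|] [x|] Hp0 Hp.
  - destruct (Rlt_dec (Rabs (x - x0)) d) as [Hnear|Hfar'].
    + pose proof (Huc x x0 Hp Hp0 (Rlt_le_trans _ _ _ Hnear (Rmin_l _ _))).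
      pose proof (Hsep (VL x0) (VL x)). lra.
    + apply Hfar; [exact Hp0 | exact Hp |]. apply sep_far; [exact Hd | exact Hp0 | exact Hp | lra].
  - apply Hfar; [exact Hp0 | exact Hp |]. unfold sep, shifted_pow, ind_plus.
    pose proof (pow2_ge_0 (0 - (x0 - r) ^ 2)). lra.
  - apply Hfar; [exact Hp0 | exact Hp |]. unfold sep, ind_plus. lra.
  - rewrite Rminus_diag, Rabs_R0. pose proof (Hsep VPlus VPlus). lra.
Qed.

(** * Feller semigroups from the maximum principle and the range condition *)

Definition in_dom_closure (r : R) (A : (Vpt -> R) -> (Vpt -> R) -> Prop) (e : Vpt -> R) : Prop :=
  forall eps, 0 < eps -> exists f h, A f h /\ forall p, inV r p -> Rabs (f p - e p) <= eps.

Section FellerGeneration.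

Variable r : R.
Hypothesis r_nonneg : 0 <= r.
Hypothesis r_le_1 : r <= 1.

Variable A : (Vpt -> R) -> (Vpt -> R) -> Prop.

Hypothesis A_inC : forall f h, A f h -> inC r f /\ inC r h.
Hypothesis A_ext : forall f h f' h', A f h -> eq_on_V r f f' -> eq_on_V r h h' -> A f' h'.
Hypothesis A_lin : forall f h g k a b, A f h -> A g k ->
  A (fun p => a * f p + b * g p) (fun p => a * h p + b * k p).
Hypothesis A_one : A (fun _ => 1) (fun _ => 0).
Hypothesis A_max_principle : forall f h p, A f h -> inV r p ->
  (forall q, inV r q -> f q <= f p) -> h p <= 0.
Hypothesis A_range : forall eta, 0 < eta -> forall g, inC r g ->
  exists u h, A u h /\ forall p, inV r p -> u p - eta * h p = g p.
Hypothesis A_closure_pow2 : in_dom_closure r A (shifted_pow r 2).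
Hypothesis A_closure_pow4 : in_dom_closure r A (shifted_pow r 4).
Hypothesis A_closure_plus : in_dom_closure r A ind_plus.

Lemma A_inC_l f h : A f h -> inC r f.
Proof. intros H. exact (proj1 (A_inC f h H)). Qed.

Lemma A_inC_r f h : A f h -> inC r h.
Proof. intros H. exact (proj2 (A_inC f h H)). Qed.

Lemma A_scale f h a : A f h -> A (fun p => a * f p) (fun p => a * h p).
Proof.
  intros H. eapply A_ext; [exact (A_lin f h f h a 0 H H) | |]; intros p _; ring.
Qed.

Lemma A_const c : A (fun _ => c) (fun _ => 0).
Proof.
  eapply A_ext; [exact (A_scale _ _ c A_one) | |]; intros p _; ring.
Qed.

Lemma A_resolvent_injective eta u h : 0 < eta -> A u h ->
  (forall p, inV r p -> u p - eta * h p = 0) -> eq_on_V r u (fun _ => 0).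
Proof.
  intros He HA Hu.
  destruct (inC_attains_max r u r_le_1 (A_inC_l _ _ HA)) as [p [Hp Hmax]].
  destruct (inC_attains_min r u r_le_1 (A_inC_l _ _ HA)) as [q [Hq Hmin]].
  pose proof (A_max_principle u h p HA Hp Hmax) as Hhp.
  pose proof (A_max_principle _ _ q (A_scale u h (-1) HA) Hq
                ltac:(intros s Hs; specialize (Hmin s Hs); lra)) as Hhq.
  pose proof (Hu p Hp). pose proof (Hu q Hq).
  assert (eta * h p <= 0) by (apply Rmult_le_0_l; lra).
  assert (0 <= eta * h q) by (apply Rmult_le_pos; lra).
  intros s Hs. specialize (Hmax s Hs). specialize (Hmin s Hs). lra.
Qed.

(** The resolvent [(I - eta A)^-1 g], picked by Hilbert's epsilon; by
    [A_resolvent_injective] it is determined on [V_r]. *)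
Definition res (eta : R) (g : Vpt -> R) : Vpt -> R :=
  epsilon (inhabits g) (fun u => exists h, A u h /\ forall p, inV r p -> u p - eta * h p = g p).

Lemma res_spec eta g : 0 < eta -> inC r g ->
  exists h, A (res eta g) h /\ forall p, inV r p -> res eta g p - eta * h p = g p.
Proof.
  intros He Hg. unfold res. apply epsilon_spec.
  destruct (A_range eta He g Hg) as [u [h [H1 H2]]]. exists u, h. split; assumption.
Qed.

Lemma res_inC eta g : 0 < eta -> inC r g -> inC r (res eta g).
Proof. intros He Hg. destruct (res_spec eta g He Hg) as [h [H _]]. exact (A_inC_l _ _ H). Qed.

Lemma res_unique eta g u h : 0 < eta -> A u h ->
  (forall p, inV r p -> u p - eta * h p = g p) -> eq_on_V r (res eta g) u.
Proof.
  intros He HA Hu.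
  assert (Hg : inC r g).
  { apply (inC_ext r (fun p => 1 * u p + (- eta) * h p));
      [intros p Hp; rewrite <- Hu by exact Hp; ring|].
    apply inC_lin; [exact (A_inC_l _ _ HA) | exact (A_inC_r _ _ HA)]. }
  destruct (res_spec eta g He Hg) as [k [Hk1 Hk2]].
  intros p Hp.
  assert (Z := A_resolvent_injective eta _ _ He (A_lin _ _ _ _ 1 (-1) Hk1 HA)
                 ltac:(intros q Hq; specialize (Hk2 q Hq); specialize (Hu q Hq); lra) p Hp).
  simpl in Z. lra.
Qed.

Lemma res_ext eta g g' : 0 < eta -> inC r g -> eq_on_V r g g' -> eq_on_V r (res eta g) (res eta g').
Proof.
  intros He Hg Heq p Hp. destruct (res_spec eta g He Hg) as [k [Hk1 Hk2]].
  symmetry. apply (res_unique eta g' _ k He Hk1); [|exact Hp].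
  intros q Hq. rewrite Hk2 by exact Hq. apply Heq, Hq.
Qed.

Lemma res_lin eta f g a b : 0 < eta -> inC r f -> inC r g ->
  eq_on_V r (res eta (fun p => a * f p + b * g p)) (fun p => a * res eta f p + b * res eta g p).
Proof.
  intros He Hf Hg.
  destruct (res_spec eta f He Hf) as [k [Hk1 Hk2]].
  destruct (res_spec eta g He Hg) as [l [Hl1 Hl2]].
  apply (res_unique _ _ _ _ He (A_lin _ _ _ _ a b Hk1 Hl1)).
  intros p Hp. rewrite <- Hk2, <- Hl2 by exact Hp. ring.
Qed.

Lemma res_const eta c : 0 < eta -> eq_on_V r (res eta (fun _ => c)) (fun _ => c).
Proof. intros He. apply (res_unique _ _ _ _ He (A_const c)). intros; ring. Qed.

Lemma res_nonneg eta g : 0 < eta -> inC r g -> (forall p, inV r p -> 0 <= g p) ->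
  forall p, inV r p -> 0 <= res eta g p.
Proof.
  intros He Hg Hpos.
  destruct (res_spec eta g He Hg) as [k [Hk1 Hk2]].
  destruct (inC_attains_min r (res eta g) r_le_1 (A_inC_l _ _ Hk1)) as [q [Hq Hmin]].
  pose proof (A_max_principle _ _ q (A_scale _ _ (-1) Hk1) Hq
                ltac:(intros s Hs; specialize (Hmin s Hs); lra)).
  intros p Hp. specialize (Hmin p Hp). specialize (Hk2 q Hq). specialize (Hpos q Hq).
  assert (0 <= eta * k q) by (apply Rmult_le_pos; lra). lra.
Qed.

Lemma res_mono eta g g' : 0 < eta -> inC r g -> inC r g' -> (forall p, inV r p -> g p <= g' p) ->
  forall p, inV r p -> res eta g p <= res eta g' p.
Proof.
  intros He Hg Hg' Hle p Hp.
  pose proof (res_nonneg eta (fun q => 1 * g' q + (-1) * g q) He (inC_lin r _ _ _ _ Hg' Hg)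
                ltac:(intros q Hq; specialize (Hle q Hq); lra) p Hp) as H.
  rewrite (res_lin eta g' g 1 (-1) He Hg' Hg p Hp) in H. lra.
Qed.

Lemma res_bounded_by eta g M : 0 < eta -> inC r g -> bounded_by r g M -> bounded_by r (res eta g) M.
Proof.
  intros He Hg Hb p Hp. apply Rabs_le_between.
  pose proof (res_mono eta g (fun _ => M) He Hg (inC_const r M)
                ltac:(intros q Hq; apply (Rabs_le_between (g q)), Hb, Hq) p Hp).
  pose proof (res_mono eta (fun _ => -M) g He (inC_const r (-M)) Hg
                ltac:(intros q Hq; apply (Rabs_le_between (g q)), Hb, Hq) p Hp).
  rewrite (res_const eta M He p Hp) in *. rewrite (res_const eta (-M) He p Hp) in *. lra.
Qed.

Lemma res_dist eta g g' M : 0 < eta -> inC r g -> inC r g' ->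
  (forall p, inV r p -> Rabs (g p - g' p) <= M) ->
  forall p, inV r p -> Rabs (res eta g p - res eta g' p) <= M.
Proof.
  intros He Hg Hg' Hb p Hp.
  pose proof (res_bounded_by eta _ M He (inC_lin r _ _ 1 (-1) Hg Hg')
                ltac:(intros q Hq; replace (1 * g q + -1 * g' q) with (g q - g' q) by ring; auto)
                p Hp) as H.
  rewrite (res_lin eta g g' 1 (-1) He Hg Hg' p Hp) in H.
  replace (res eta g p - res eta g' p) with (1 * res eta g p + -1 * res eta g' p) by ring. exact H.
Qed.

Lemma res_dom eta f k : 0 < eta -> A f k ->
  eq_on_V r (res eta f) (fun p => f p + eta * res eta k p).
Proof.
  intros He HA.
  destruct (res_spec eta k He (A_inC_r _ _ HA)) as [l [Hl1 Hl2]].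
  assert (E : eq_on_V r (res eta f) (fun p => 1 * f p + eta * res eta k p)).
  { apply (res_unique eta f _ _ He (A_lin _ _ _ _ 1 eta HA Hl1)).
    intros p Hp. specialize (Hl2 p Hp).
    replace (1 * f p + eta * res eta k p - eta * (1 * k p + eta * l p))
      with (f p - eta * k p + eta * (res eta k p - eta * l p)) by ring.
    rewrite Hl2. ring. }
  intros p Hp. rewrite (E p Hp). ring.
Qed.

Lemma res_dom_dist eta f k M : 0 < eta -> A f k -> bounded_by r k M ->
  forall p, inV r p -> Rabs (res eta f p - f p) <= eta * M.
Proof.
  intros He HA Hb p Hp. rewrite (res_dom eta f k He HA p Hp).
  replace (f p + eta * res eta k p - f p) with (eta * res eta k p) by ring.
  rewrite Rabs_mult, Rabs_pos_eq by lra. apply Rmult_le_compat_l; [lra|].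
  exact (res_bounded_by eta k M He (A_inC_r _ _ HA) Hb p Hp).
Qed.

Lemma res_graph eta g : 0 < eta -> inC r g -> A (res eta g) (fun p => (res eta g p - g p) / eta).
Proof.
  intros He Hg. destruct (res_spec eta g He Hg) as [k [Hk1 Hk2]].
  eapply A_ext; [exact Hk1 | intros p _; reflexivity |].
  intros p Hp. rewrite <- (Hk2 p Hp). field. lra.
Qed.

Lemma res_graph_dom eta f k : 0 < eta -> A f k -> A (res eta f) (res eta k).
Proof.
  intros He HA.
  eapply A_ext; [exact (res_graph eta f He (A_inC_l _ _ HA)) | intros p _; reflexivity |].
  intros p Hp. rewrite (res_dom eta f k He HA p Hp). field. lra.
Qed.

Lemma resolvent_identity eta mu g : 0 < eta -> 0 < mu -> eta <> mu -> inC r g ->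
  eq_on_V r (res eta (res mu g)) (fun p => (mu * res mu g p - eta * res eta g p) / (mu - eta)).
Proof.
  intros He Hm Hne Hg p Hp.
  assert (Hu := res_graph mu g Hm Hg).
  assert (E : eq_on_V r (fun p => (res mu g p - g p) / mu)
                        (fun p => / mu * res mu g p + (- / mu) * g p))
    by (intros q _; field; lra).
  assert (E2 : res eta (res mu g) p
               = res mu g p + eta * res eta (fun q => (res mu g q - g q) / mu) p)
    by exact (res_dom eta _ _ He Hu p Hp).
  rewrite (res_ext eta _ _ He (A_inC_r _ _ Hu) E p Hp) in E2.
  rewrite (res_lin eta _ _ _ _ He (res_inC mu g Hm Hg) Hg p Hp) in E2.
  set (X := res eta (res mu g) p) in *. set (Y := res eta g p) in *. set (U := res mu g p) in *.
  assert (Hd : mu - eta <> 0) by lra.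
  apply (Rmult_eq_reg_r (mu - eta)); [| exact Hd].
  replace U with (X - eta * (/ mu * X + - / mu * Y)) by lra. field. lra.
Qed.

Lemma res_comm eta mu g : 0 < eta -> 0 < mu -> inC r g ->
  eq_on_V r (res eta (res mu g)) (res mu (res eta g)).
Proof.
  intros He Hm Hg. destruct (Req_dec eta mu) as [<-|Hne]; [intros p _; reflexivity|].
  intros p Hp. rewrite (resolvent_identity eta mu g He Hm Hne Hg p Hp).
  rewrite (resolvent_identity mu eta g Hm He (not_eq_sym Hne) Hg p Hp).
  field. lra.
Qed.

Fixpoint resn (eta : R) (n : nat) (g : Vpt -> R) : Vpt -> R :=
  match n with O => g | S n => res eta (resn eta n g) end.

Lemma resn_inC eta n g : 0 < eta -> inC r g -> inC r (resn eta n g).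
Proof. intros He Hg; induction n; simpl; [exact Hg | apply res_inC; assumption]. Qed.

Lemma resn_lin eta n f g a b : 0 < eta -> inC r f -> inC r g ->
  eq_on_V r (resn eta n (fun p => a * f p + b * g p))
            (fun p => a * resn eta n f p + b * resn eta n g p).
Proof.
  intros He Hf Hg; induction n; simpl; [intros p _; reflexivity|].
  intros p Hp.
  rewrite (res_ext eta _ _ He (resn_inC eta n _ He (inC_lin r f g a b Hf Hg)) IHn p Hp).
  apply res_lin; [exact He | apply resn_inC; assumption | apply resn_inC; assumption | exact Hp].
Qed.

Lemma resn_const eta n c : 0 < eta -> eq_on_V r (resn eta n (fun _ => c)) (fun _ => c).
Proof.
  intros He; induction n; simpl; [intros p _; reflexivity|].
  intros p Hp. rewrite (res_ext eta _ _ He (resn_inC eta n _ He (inC_const r c)) IHn p Hp).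
  apply res_const; assumption.
Qed.

Lemma resn_nonneg eta n g : 0 < eta -> inC r g -> (forall p, inV r p -> 0 <= g p) ->
  forall p, inV r p -> 0 <= resn eta n g p.
Proof.
  intros He Hg Hpos; induction n; simpl; [exact Hpos|].
  apply res_nonneg; [exact He | apply resn_inC; assumption | exact IHn].
Qed.

Lemma resn_dist eta n g g' M : 0 < eta -> inC r g -> inC r g' ->
  (forall p, inV r p -> Rabs (g p - g' p) <= M) ->
  forall p, inV r p -> Rabs (resn eta n g p - resn eta n g' p) <= M.
Proof.
  intros He Hg Hg' Hb; induction n; simpl; [exact Hb|].
  apply res_dist; [exact He | apply resn_inC; assumption | apply resn_inC; assumption | exact IHn].
Qed.

Lemma resn_add eta a b g : resn eta (a + b) g = resn eta a (resn eta b g).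
Proof. induction a; simpl; [reflexivity | rewrite IHa; reflexivity]. Qed.

Lemma res_resn_comm eta mu n g : 0 < eta -> 0 < mu -> inC r g ->
  eq_on_V r (res mu (resn eta n g)) (resn eta n (res mu g)).
Proof.
  intros He Hm Hg; induction n; simpl; [intros p _; reflexivity|].
  intros p Hp. rewrite (res_comm mu eta _ Hm He (resn_inC eta n g He Hg) p Hp).
  apply res_ext;
    [exact He | apply res_inC; [exact Hm | apply resn_inC; assumption] | exact IHn | exact Hp].
Qed.

Lemma resn_succ_dist eta n g M : 0 < eta -> inC r g ->
  (forall p, inV r p -> Rabs (res eta g p - g p) <= M) ->
  forall p, inV r p -> Rabs (resn eta (S n) g p - resn eta n g p) <= M.
Proof.
  intros He Hg Hb p Hp. simpl.
  rewrite (res_resn_comm eta eta n g He He Hg p Hp).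
  apply resn_dist; [exact He | apply res_inC; assumption | exact Hg | exact Hb | exact Hp].
Qed.

Lemma resn_graph_dom eta n f k : 0 < eta -> A f k -> A (resn eta n f) (resn eta n k).
Proof. intros He HA; induction n; simpl; [exact HA | apply res_graph_dom; assumption]. Qed.

Lemma resn_succ_dom eta n f k : 0 < eta -> A f k -> forall p, inV r p ->
  resn eta (S n) f p = resn eta n f p + eta * resn eta (S n) k p.
Proof. intros He HA p Hp. exact (res_dom eta _ _ He (resn_graph_dom eta n f k He HA) p Hp). Qed.

Lemma resn_dom_dist eta n f k M : 0 < eta -> A f k -> bounded_by r k M ->
  forall p, inV r p -> Rabs (resn eta n f p - f p) <= INR n * eta * M.
Proof.
  intros He HA Hb. induction n; intros p Hp.
  - simpl. rewrite Rminus_diag, Rabs_R0. lra.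
  - pose proof (resn_succ_dist eta n f _ He (A_inC_l _ _ HA)
                  (res_dom_dist eta f k M He HA Hb) p Hp).
    specialize (IHn p Hp). rewrite S_INR.
    replace (resn eta (S n) f p - f p)
      with ((resn eta (S n) f p - resn eta n f p) + (resn eta n f p - f p)) by ring.
    eapply Rle_trans; [apply Rabs_triang | lra].
Qed.

Lemma res_add_scaled eta F f a : 0 < eta -> inC r F -> inC r f ->
  eq_on_V r (res eta (fun q => F q + a * f q)) (fun q => res eta F q + a * res eta f q).
Proof.
  intros He HF Hf p Hp.
  assert (E : eq_on_V r (fun q => 1 * F q + a * f q) (fun q => F q + a * f q))
    by (intros q _; ring).
  rewrite <- (res_ext eta _ _ He (inC_lin r F f 1 a HF Hf) E p Hp).
  rewrite (res_lin eta F f 1 a He HF Hf p Hp). ring.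
Qed.

Lemma res_affine eta c a1 a2 a3 f1 f2 f3 : 0 < eta -> inC r f1 -> inC r f2 -> inC r f3 ->
  forall p, inV r p ->
  res eta (fun q => c + a1 * f1 q + a2 * f2 q + a3 * f3 q) p =
  c + a1 * res eta f1 p + a2 * res eta f2 p + a3 * res eta f3 p.
Proof.
  intros He H1 H2 H3.
  pose proof (res_add_scaled eta) as Hadd.
  assert (C1 : inC r (fun q => c + a1 * f1 q)).
  { apply (inC_ext r (fun q => c * 1 + a1 * f1 q));
      [intros q _; ring | apply inC_lin; [apply inC_const | exact H1]]. }
  assert (C2 : inC r (fun q => c + a1 * f1 q + a2 * f2 q))
    by (apply (inC_ext r (fun q => 1 * (c + a1 * f1 q) + a2 * f2 q));
          [intros q _; ring | apply inC_lin; assumption]).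
  intros p Hp.
  rewrite (Hadd _ f3 a3 He C2 H3 p Hp), (Hadd _ f2 a2 He C1 H2 p Hp),
          (Hadd _ f1 a1 He (inC_const r c) H1 p Hp).
  rewrite (res_const eta c He p Hp). reflexivity.
Qed.

Lemma res_approx_of_closure e : inC r e -> in_dom_closure r A e ->
  forall eps, 0 < eps -> exists eta0, 0 < eta0 /\ forall eta, 0 < eta < eta0 ->
    forall p, inV r p -> Rabs (res eta e p - e p) <= eps.
Proof.
  intros He Hcl eps Heps.
  destruct (Hcl (eps / 3)) as [f [k [HA Hf]]]; [lra|].
  destruct (inC_bounded r k r_le_1 (A_inC_r _ _ HA)) as [Mk [HMk Hbk]].
  exists (eps / 3 / (Mk + 1)). split; [apply Rdiv_lt_0_compat; lra|].
  intros eta [Heta Heta2] p Hp.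
  assert (H1 : Rabs (res eta e p - res eta f p) <= eps / 3).
  { apply res_dist; [exact Heta | exact He | exact (A_inC_l _ _ HA) | | exact Hp].
    intros q Hq. rewrite Rabs_minus_sym. exact (Hf q Hq). }
  pose proof (res_dom_dist eta f k Mk Heta HA Hbk p Hp) as H2.
  pose proof (mul_lt_of_lt_div_succ eta Mk (eps / 3) HMk ltac:(lra) ltac:(lra)).
  pose proof (Hf p Hp) as H3.
  replace (res eta e p - e p)
    with ((res eta e p - res eta f p) + (res eta f p - f p) + (f p - e p)) by ring.
  eapply Rle_trans; [apply Rabs_triang|].
  eapply Rle_trans; [apply Rplus_le_compat_r, Rabs_triang|]. lra.
Qed.

Lemma res_dominated eta g phi p0 c K : 0 < eta -> inC r g -> inC r phi -> inV r p0 ->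
  (forall p, inV r p -> Rabs (g p - g p0) <= c + K * phi p) ->
  Rabs (res eta g p0 - g p0) <= c + K * res eta phi p0.
Proof.
  intros He Hg Hphi Hp0 Hdom.
  assert (Hres : forall a b, res eta (fun q => a * 1 + b * phi q) p0 = a + b * res eta phi p0).
  { intros a b. rewrite (res_lin eta _ _ a b He (inC_const r 1) Hphi p0 Hp0).
    rewrite (res_const eta 1 He p0 Hp0). ring. }
  apply Rabs_le_between'. split.
  - pose proof (res_mono eta (fun q => (g p0 - c) * 1 + (- K) * phi q) g He
                  (inC_lin r _ _ _ _ (inC_const r 1) Hphi) Hg
                  ltac:(intros q Hq; pose proof (proj1 (Rabs_le_between' _ _ _) (Hdom q Hq)); lra)
                  p0 Hp0).
    rewrite Hres in *. lra.
  - pose proof (res_mono eta g (fun q => (g p0 + c) * 1 + K * phi q) He Hg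
                  (inC_lin r _ _ _ _ (inC_const r 1) Hphi)
                  ltac:(intros q Hq; pose proof (proj1 (Rabs_le_between' _ _ _) (Hdom q Hq)); lra)
                  p0 Hp0).
    rewrite Hres in *. lra.
Qed.

Lemma res_sep_small eta tau p0 : 0 < eta -> inV r p0 ->
  Rabs (res eta (shifted_pow r 2) p0 - shifted_pow r 2 p0) <= tau ->
  Rabs (res eta (shifted_pow r 4) p0 - shifted_pow r 4 p0) <= tau ->
  Rabs (res eta ind_plus p0 - ind_plus p0) <= tau ->
  res eta (sep r p0) p0 <= 4 * tau.
Proof.
  intros He Hp0 T2 T4 TI.
  apply Rabs_le_between' in T2, T4, TI.
  destruct p0 as [x0|].
  - set (s := x0 - r). assert (Hx0 : r <= x0 <= 1) by exact Hp0.
    assert (Hs2 : 0 <= s ^ 2 <= 1).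
    { split; [apply pow2_ge_0|]. rewrite <- (pow1 2). apply pow_incr. unfold s. lra. }
    assert (E : eq_on_V r (sep r (VL x0)) (fun q => s ^ 4 + 1 * shifted_pow r 4 q
                                    + (- 2 * s ^ 2) * shifted_pow r 2 q + 1 * ind_plus q))
      by (intros [x|] _; unfold sep, shifted_pow, ind_plus; fold s; ring).
    rewrite (res_ext eta _ _ He (sep_inC r (VL x0)) E (VL x0) Hp0).
    rewrite (res_affine eta _ _ _ _ _ _ _ He (shifted_pow_inC r 4) (shifted_pow_inC r 2)
               (ind_plus_inC r) (VL x0) Hp0).
    change (shifted_pow r 2 (VL x0)) with (s ^ 2) in T2.
    change (shifted_pow r 4 (VL x0)) with (s ^ 4) in T4.
    change (ind_plus (VL x0)) with 0 in TI.
    assert (s ^ 2 * (s ^ 2 - tau) <= s ^ 2 * res eta (shifted_pow r 2) (VL x0))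
      by (apply Rmult_le_compat_l; lra).
    assert (s ^ 2 * tau <= tau) by (rewrite <- (Rmult_1_l tau) at 2; apply Rmult_le_compat_r; lra).
    replace (s ^ 4) with (s ^ 2 * s ^ 2) in * by ring. lra.
  - assert (E : eq_on_V r (sep r VPlus)
                          (fun q => 1 + 0 * ind_plus q + 0 * ind_plus q + (-1) * ind_plus q))
      by (intros q _; unfold sep; ring).
    rewrite (res_ext eta _ _ He (sep_inC r VPlus) E VPlus I).
    rewrite (res_affine eta _ _ _ _ _ _ _ He (ind_plus_inC r) (ind_plus_inC r) (ind_plus_inC r)
               VPlus I).
    change (ind_plus VPlus) with 1 in TI. lra.
Qed.

Theorem res_approx_id g : inC r g -> forall eps, 0 < eps -> exists eta0, 0 < eta0 /\
  forall eta, 0 < eta < eta0 -> forall p, inV r p -> Rabs (res eta g p - g p) <= eps.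
Proof.
  intros Hg eps He.
  destruct (sep_dominates r g r_le_1 Hg (eps / 2) ltac:(lra)) as [K [HK Hdom]].
  set (tau := eps / (8 * (K + 1))).
  assert (Htau : 0 < tau) by (apply Rdiv_lt_0_compat; lra).
  assert (HKtau : K * (4 * tau) <= eps / 2).
  { apply Rle_trans with ((K + 1) * (4 * tau)); [apply Rmult_le_compat_r; lra|].
    unfold tau. right. field. lra. }
  destruct (res_approx_of_closure _ (shifted_pow_inC r 2) A_closure_pow2 tau Htau) as [n2 [Hn2 D2]].
  destruct (res_approx_of_closure _ (shifted_pow_inC r 4) A_closure_pow4 tau Htau) as [n4 [Hn4 D4]].
  destruct (res_approx_of_closure _ (ind_plus_inC r) A_closure_plus tau Htau) as [nI [HnI DI]].
  exists (Rmin n2 (Rmin n4 nI)). split; [repeat apply Rmin_pos; assumption|].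
  intros eta [Heta Hlt] p0 Hp0.
  pose proof (Rmin_l n2 (Rmin n4 nI)). pose proof (Rmin_r n2 (Rmin n4 nI)).
  pose proof (Rmin_l n4 nI). pose proof (Rmin_r n4 nI).
  pose proof (res_sep_small eta tau p0 Heta Hp0 (D2 eta ltac:(lra) p0 Hp0)
                (D4 eta ltac:(lra) p0 Hp0) (DI eta ltac:(lra) p0 Hp0)) as Hsmall.
  pose proof (res_dominated eta g (sep r p0) p0 (eps / 2) K Heta Hg (sep_inC r p0) Hp0
                (fun p Hp => Hdom p0 p Hp0 Hp)).
  assert (K * res eta (sep r p0) p0 <= K * (4 * tau)) by (apply Rmult_le_compat_l; assumption).
  lra.
Qed.

Lemma res_half_twice_dist h f k l Ml : 0 < h -> A f k -> A k l -> bounded_by r l Ml ->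
  forall p, inV r p -> Rabs (res (h / 2) (res (h / 2) f) p - res h f p) <= 2 * h ^ 2 * Ml.
Proof.
  intros Hh Hf Hk Hl p Hp.
  assert (Hh2 : 0 < h / 2) by lra.
  assert (Cl := A_inC_r _ _ Hk).
  rewrite (res_dom (h / 2) _ _ Hh2 (res_graph_dom _ _ _ Hh2 Hf) p Hp),
          (res_dom (h / 2) _ _ Hh2 (res_graph_dom _ _ _ Hh2 Hk) p Hp),
          (res_dom (h / 2) f k Hh2 Hf p Hp), (res_dom (h / 2) k l Hh2 Hk p Hp),
          (res_dom h f k Hh Hf p Hp), (res_dom h k l Hh Hk p Hp).
  pose proof (res_bounded_by h l Ml Hh Cl Hl p Hp) as B1.
  pose proof (res_bounded_by (h / 2) l Ml Hh2 Cl Hl p Hp) as B2.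
  pose proof (res_bounded_by (h / 2) _ Ml Hh2 (res_inC _ _ Hh2 Cl)
                (res_bounded_by (h / 2) l Ml Hh2 Cl Hl) p Hp) as B3.
  set (x1 := res h l p) in *. set (x2 := res (h / 2) l p) in *.
  set (x3 := res (h / 2) (res (h / 2) l) p) in *.
  replace (f p + h / 2 * (k p + h / 2 * x2) + h / 2 * (k p + h / 2 * x2 + h / 2 * x3)
           - (f p + h * (k p + h * x1)))
    with (h ^ 2 * (x2 / 2 + x3 / 4 - x1)) by field.
  rewrite Rabs_mult, Rabs_pos_eq by apply pow2_ge_0.
  replace (2 * h ^ 2 * Ml) with (h ^ 2 * (2 * Ml)) by ring.
  apply Rmult_le_compat_l; [apply pow2_ge_0|].
  apply Rabs_le_between in B1, B2, B3. apply Rabs_le_between. lra.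
Qed.

Lemma resn_half_dist h f k l Ml : 0 < h -> A f k -> A k l -> bounded_by r l Ml ->
  forall n p, inV r p ->
  Rabs (resn h n f p - resn (h / 2) (2 * n) f p) <= INR n * (2 * h ^ 2 * Ml).
Proof.
  intros Hh Hf Hk Hl.
  assert (Hh2 : 0 < h / 2) by lra.
  assert (Cf := A_inC_l _ _ Hf).
  induction n as [|n IH]; intros p Hp.
  - simpl. rewrite Rminus_diag, Rabs_R0. lra.
  - replace (2 * S n)%nat with (2 * n + 2)%nat by lia. rewrite resn_add. simpl resn at 1.
    assert (C1 := resn_inC h n f Hh Cf). assert (C2 := resn_inC (h / 2) (2 * n) f Hh2 Cf).
    assert (H1 : Rabs (res h (resn h n f) p - resn (h / 2) (2 * n) (res h f) p)
                 <= INR n * (2 * h ^ 2 * Ml)).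
    { rewrite <- (res_resn_comm (h / 2) h (2 * n) f Hh2 Hh Cf p Hp).
      apply res_dist; assumption. }
    assert (H2 : Rabs (resn (h / 2) (2 * n) (res h f) p - resn (h / 2) (2 * n) (resn (h / 2) 2 f) p)
                 <= 2 * h ^ 2 * Ml).
    { apply resn_dist;
        [exact Hh2 | apply res_inC; assumption | apply resn_inC; assumption | | exact Hp].
      intros q Hq. rewrite Rabs_minus_sym. exact (res_half_twice_dist h f k l Ml Hh Hf Hk Hl q Hq). }
    rewrite S_INR.
    replace (res h (resn h n f) p - resn (h / 2) (2 * n) (resn (h / 2) 2 f) p)
      with ((res h (resn h n f) p - resn (h / 2) (2 * n) (res h f) p)
            + (resn (h / 2) (2 * n) (res h f) p - resn (h / 2) (2 * n) (resn (h / 2) 2 f) p)) by ring.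
    eapply Rle_trans; [apply Rabs_triang | lra].
Qed.

Definition euler (N : nat) (t : R) (g : Vpt -> R) : Vpt -> R := resn (mesh N) (steps N t) g.

Lemma euler_inC N t g : inC r g -> inC r (euler N t g).
Proof. intros Hg. apply resn_inC; [apply mesh_pos | exact Hg]. Qed.

Lemma euler_succ_dist N t f k l Mk Ml : 0 <= t -> A f k -> A k l ->
  bounded_by r k Mk -> bounded_by r l Ml ->
  forall p, inV r p -> Rabs (euler N t f p - euler (S N) t f p) <= mesh N * (2 * t * Ml + Mk).
Proof.
  intros Ht Hf Hk Hbk Hbl p Hp. unfold euler. rewrite mesh_S.
  set (h := mesh N). assert (Hh : 0 < h) by apply mesh_pos.
  assert (HMk := bounded_by_nonneg _ _ _ Hbk). assert (HMl := bounded_by_nonneg _ _ _ Hbl).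
  assert (Hm := proj1 (steps_spec N t Ht)). fold h in Hm.
  assert (S2 := resn_half_dist h f k l Ml Hh Hf Hk Hbl (steps N t) p Hp).
  assert (HS2 : INR (steps N t) * (2 * h ^ 2 * Ml) <= h * (2 * t * Ml)).
  { replace (INR (steps N t) * (2 * h ^ 2 * Ml)) with ((INR (steps N t) * h) * (2 * h * Ml)) by ring.
    replace (h * (2 * t * Ml)) with (t * (2 * h * Ml)) by ring.
    apply Rmult_le_compat_r; [nra | exact Hm]. }
  assert (0 <= h * Mk) by nra.
  destruct (steps_S N t Ht) as [E|E]; rewrite E; [lra|].
  pose proof (resn_succ_dist (h / 2) (2 * steps N t) f _ ltac:(lra) (A_inC_l _ _ Hf)
                (res_dom_dist (h / 2) f k Mk ltac:(lra) Hf Hbk) p Hp) as H3.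
  apply Rabs_le_between in S2, H3. apply Rabs_le_between. lra.
Qed.

Lemma euler_cauchy_dom N t f k l Mk Ml : 0 <= t -> A f k -> A k l ->
  bounded_by r k Mk -> bounded_by r l Ml ->
  forall n p, inV r p ->
  Rabs (euler N t f p - euler (N + n) t f p) <= 2 * mesh N * (2 * t * Ml + Mk).
Proof.
  intros Ht Hf Hk Hbk Hbl.
  assert (Hc : 0 <= 2 * t * Ml + Mk).
  { pose proof (bounded_by_nonneg _ _ _ Hbk). pose proof (bounded_by_nonneg _ _ _ Hbl). nra. }
  (* telescoping with [mesh N + ... + mesh (N + n - 1) = 2 mesh N - 2 mesh (N + n)] *)
  assert (Htel : forall n p, inV r p ->
    Rabs (euler N t f p - euler (N + n) t f p)
    <= (2 * mesh N - 2 * mesh (N + n)) * (2 * t * Ml + Mk)).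
  { induction n as [|n IH]; intros p Hp.
    - rewrite Nat.add_0_r, Rminus_diag, Rabs_R0. lra.
    - pose proof (euler_succ_dist (N + n) t f k l Mk Ml Ht Hf Hk Hbk Hbl p Hp).
      specialize (IH p Hp).
      replace (N + S n)%nat with (S (N + n)) by lia. rewrite mesh_S.
      replace (euler N t f p - euler (S (N + n)) t f p)
        with ((euler N t f p - euler (N + n) t f p) + (euler (N + n) t f p - euler (S (N + n)) t f p))
        by ring.
      eapply Rle_trans; [apply Rabs_triang | nra]. }
  intros n p Hp. eapply Rle_trans; [exact (Htel n p Hp)|].
  pose proof (mesh_pos (N + n)). nra.
Qed.

Lemma res2_dom2 eta g : 0 < eta -> inC r g -> exists k l, A (res eta (res eta g)) k /\ A k l.
Proof.
  intros He Hg.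
  assert (Hk := res_graph eta g He Hg).
  exists (res eta (fun p => (res eta g p - g p) / eta)),
         (fun p => (res eta (fun q => (res eta g q - g q) / eta) p - (res eta g p - g p) / eta) / eta).
  split; [apply res_graph_dom; assumption | apply res_graph; [exact He | exact (A_inC_r _ _ Hk)]].
Qed.

Lemma euler_cauchy g t : inC r g -> 0 <= t -> forall eps, 0 < eps -> exists N0, forall N n p,
  (N0 <= N)%nat -> inV r p -> Rabs (euler N t g p - euler (N + n) t g p) <= eps.
Proof.
  intros Hg Ht eps He.
  destruct (res_approx_id g Hg (eps / 6)) as [e0 [He0 Hk]]; [lra|].
  set (eta := e0 / 2). assert (Heta : 0 < eta < e0) by (unfold eta; lra).
  set (f := res eta (res eta g)).
  assert (Hfg : forall p, inV r p -> Rabs (f p - g p) <= eps / 3).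
  { intros p Hp. unfold f.
    replace (res eta (res eta g) p - g p)
      with ((res eta (res eta g) p - res eta g p) + (res eta g p - g p)) by ring.
    eapply Rle_trans; [apply Rabs_triang|].
    assert (Rabs (res eta (res eta g) p - res eta g p) <= eps / 6).
    { apply res_dist; [lra | apply res_inC; [lra | exact Hg] | exact Hg | | exact Hp].
      intros q Hq. apply Hk; [exact Heta | exact Hq]. }
    pose proof (Hk eta Heta p Hp). lra. }
  destruct (res2_dom2 eta g ltac:(lra) Hg) as [k [l [Hfk Hkl]]].
  destruct (inC_bounded r k r_le_1 (A_inC_l _ _ Hkl)) as [Mk [HMk Hbk]].
  destruct (inC_bounded r l r_le_1 (A_inC_r _ _ Hkl)) as [Ml [HMl Hbl]].
  set (c := 2 * t * Ml + Mk).
  assert (Hc : 0 <= c) by (unfold c; nra).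
  destruct (mesh_small (eps / 6 / (c + 1))) as [N0 HN0]; [apply Rdiv_lt_0_compat; lra|].
  exists N0. intros N n p HN Hp.
  pose proof (euler_cauchy_dom N t f k l Mk Ml Ht Hfk Hkl Hbk Hbl n p Hp) as S4.
  pose proof (mul_lt_of_lt_div_succ (mesh N) c (eps / 6) Hc ltac:(lra)
                (conj (Rlt_le _ _ (mesh_pos N)) (HN0 N HN))).
  assert (Cf : inC r f) by exact (A_inC_l _ _ Hfk).
  assert (H1 : Rabs (euler N t g p - euler N t f p) <= eps / 3).
  { apply resn_dist; [apply mesh_pos | exact Hg | exact Cf | | exact Hp].
    intros q Hq. rewrite Rabs_minus_sym. exact (Hfg q Hq). }
  assert (H2 : Rabs (euler (N + n) t f p - euler (N + n) t g p) <= eps / 3)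
    by (apply resn_dist; [apply mesh_pos | exact Cf | exact Hg | exact Hfg | exact Hp]).
  replace (euler N t g p - euler (N + n) t g p)
    with ((euler N t g p - euler N t f p) + (euler N t f p - euler (N + n) t f p)
          + (euler (N + n) t f p - euler (N + n) t g p)) by ring.
  apply Rabs_le_between in H1, H2, S4. apply Rabs_le_between. fold c in S4. lra.
Qed.

Definition semigroup (t : R) (g : Vpt -> R) (p : Vpt) : R :=
  real (Lim_seq (fun N => euler N t g p)).

Lemma euler_is_lim g t p : inC r g -> 0 <= t -> inV r p ->
  is_lim_seq (fun N => euler N t g p) (semigroup t g p).
Proof.
  intros Hg Ht Hp.
  assert (Hex : ex_finite_lim_seq (fun N => euler N t g p)).
  { apply ex_lim_seq_cauchy_corr. intros eps.
    destruct (euler_cauchy g t Hg Ht (eps / 3)) as [N0 HN0]; [pose proof (cond_pos eps); lra|].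
    exists N0. intros n m Hn Hm.
    pose proof (HN0 N0 (n - N0)%nat p (le_n _) Hp) as H1.
    pose proof (HN0 N0 (m - N0)%nat p (le_n _) Hp) as H2.
    replace (N0 + (n - N0))%nat with n in H1 by lia.
    replace (N0 + (m - N0))%nat with m in H2 by lia.
    pose proof (cond_pos eps).
    apply Rabs_le_between in H1, H2. apply Rabs_def1; lra. }
  destruct Hex as [l Hl]. unfold semigroup. rewrite (is_lim_seq_unique _ _ Hl). exact Hl.
Qed.

Lemma euler_unif_conv g t : inC r g -> 0 <= t -> forall eps, 0 < eps -> exists N0, forall N p,
  (N0 <= N)%nat -> inV r p -> Rabs (euler N t g p - semigroup t g p) <= eps.
Proof.
  intros Hg Ht eps He.
  destruct (euler_cauchy g t Hg Ht eps He) as [N0 HN0].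
  exists N0. intros N p HN Hp. rewrite Rabs_minus_sym.
  apply (is_lim_seq_dist_le (fun n => euler (n + N) t g p)).
  - exact (proj1 (is_lim_seq_incr_n _ N _) (euler_is_lim g t p Hg Ht Hp)).
  - intros n. rewrite Rabs_minus_sym, Nat.add_comm. exact (HN0 N n p HN Hp).
Qed.

Lemma semigroup_inC g t : inC r g -> 0 <= t -> inC r (semigroup t g).
Proof.
  intros Hg Ht. apply (inC_unif_limit r (fun N => euler N t g)).
  - intros n. apply euler_inC, Hg.
  - intros eps He. destruct (euler_unif_conv g t Hg Ht eps He) as [N0 HN0].
    exists N0. exact HN0.
Qed.

Lemma semigroup_lin t f g a b : 0 <= t -> inC r f -> inC r g -> forall p, inV r p ->
  semigroup t (fun q => a * f q + b * g q) p = a * semigroup t f p + b * semigroup t g p.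
Proof.
  intros Ht Hf Hg p Hp.
  assert (Hl : is_lim_seq (fun N => euler N t (fun q => a * f q + b * g q) p)
                          (a * semigroup t f p + b * semigroup t g p)).
  { eapply is_lim_seq_ext.
    - intros N. symmetry. exact (resn_lin _ _ f g a b (mesh_pos N) Hf Hg p Hp).
    - apply is_lim_seq_plus'; apply (is_lim_seq_scal_l _ _ (Finite _)), euler_is_lim; assumption. }
  pose proof (euler_is_lim _ t p (inC_lin r f g a b Hf Hg) Ht Hp) as Hl'.
  apply is_lim_seq_unique in Hl, Hl'. rewrite Hl' in Hl. injection Hl as E. exact E.
Qed.

Lemma semigroup_nonneg t g : 0 <= t -> inC r g -> (forall p, inV r p -> 0 <= g p) ->
  forall p, inV r p -> 0 <= semigroup t g p.
Proof.
  intros Ht Hg Hpos p Hp.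
  apply (is_lim_seq_le (fun _ => 0) (fun N => euler N t g p) 0 (semigroup t g p));
    [| apply is_lim_seq_const | apply euler_is_lim; assumption].
  intros N. apply resn_nonneg; [apply mesh_pos | exact Hg | exact Hpos | exact Hp].
Qed.

Lemma semigroup_const t c : 0 <= t -> forall p, inV r p -> semigroup t (fun _ => c) p = c.
Proof.
  intros Ht p Hp. unfold semigroup.
  rewrite (Lim_seq_ext _ (fun _ => c)), Lim_seq_const; [reflexivity|].
  intros N. exact (resn_const _ _ c (mesh_pos N) p Hp).
Qed.

Lemma semigroup_0 g : forall p, inV r p -> semigroup 0 g p = g p.
Proof.
  intros p Hp. unfold semigroup, euler.
  rewrite (Lim_seq_ext _ (fun _ => g p)), Lim_seq_const; [reflexivity|].
  intros N. rewrite steps_0. reflexivity.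
Qed.

Lemma semigroup_dist_of_euler f g t p M : inC r f -> inC r g -> 0 <= t -> inV r p ->
  (forall N, Rabs (euler N t f p - euler N t g p) <= M) ->
  Rabs (semigroup t f p - semigroup t g p) <= M.
Proof.
  intros Hf Hg Ht Hp HB. rewrite <- (Rminus_0_r (_ - _)).
  apply (is_lim_seq_dist_le (fun N => euler N t f p - euler N t g p));
    [apply is_lim_seq_minus'; apply euler_is_lim; assumption|].
  intros N. rewrite Rminus_0_r. apply HB.
Qed.

Lemma semigroup_dom_dist f k Mk t : 0 <= t -> A f k -> bounded_by r k Mk ->
  forall p, inV r p -> Rabs (semigroup t f p - f p) <= t * Mk.
Proof.
  intros Ht HA Hb p Hp.
  apply (is_lim_seq_dist_le (fun N => euler N t f p));
    [apply euler_is_lim; [exact (A_inC_l _ _ HA) | exact Ht | exact Hp]|].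
  intros N. eapply Rle_trans; [exact (resn_dom_dist _ _ f k Mk (mesh_pos N) HA Hb p Hp)|].
  apply Rmult_le_compat_r; [exact (bounded_by_nonneg _ _ _ Hb) | apply steps_spec, Ht].
Qed.

Lemma semigroup_add s t g : 0 <= s -> 0 <= t -> inC r g -> forall p, inV r p ->
  semigroup (s + t) g p = semigroup s (semigroup t g) p.
Proof.
  intros Hs Ht Hg p Hp. apply eq_of_dist_le_eps. intros e He.
  assert (HTC := semigroup_inC g t Hg Ht).
  destruct (euler_unif_conv g (s + t) Hg ltac:(lra) (e / 4)) as [N1 HN1]; [lra|].
  destruct (euler_unif_conv g t Hg Ht (e / 4)) as [N2 HN2]; [lra|].
  destruct (euler_unif_conv (semigroup t g) s HTC Hs (e / 4)) as [N3 HN3]; [lra|].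
  destruct (res_approx_id g Hg (e / 4)) as [e0 [He0 Hk]]; [lra|].
  destruct (mesh_small e0 He0) as [N4 HN4].
  set (N := (N1 + N2 + N3 + N4)%nat).
  specialize (HN1 N p ltac:(unfold N; lia) Hp).
  specialize (HN3 N p ltac:(unfold N; lia) Hp).
  assert (Hh := HN4 N ltac:(unfold N; lia)).
  assert (Hhp := mesh_pos N).
  assert (H2 : Rabs (euler N s (euler N t g) p - euler N s (semigroup t g) p) <= e / 4).
  { apply resn_dist; [exact Hhp | apply euler_inC, Hg | exact HTC | | exact Hp].
    intros q Hq. apply HN2; [unfold N; lia | exact Hq]. }
  (* [steps N (s + t)] exceeds [steps N s + steps N t] by at most one step *)
  assert (H4 : Rabs (euler N (s + t) g p - euler N s (euler N t g) p) <= e / 4).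
  { unfold euler. rewrite <- resn_add.
    destruct (steps_add N s t Hs Ht) as [E|E]; rewrite E.
    - rewrite Rminus_diag, Rabs_R0. lra.
    - apply resn_succ_dist; [exact Hhp | exact Hg | | exact Hp].
      intros q Hq. apply Hk; [lra | exact Hq]. }
  apply Rabs_le_between in HN1, HN3, H2, H4. apply Rabs_le_between. lra.
Qed.

Lemma semigroup_strong_cont g : inC r g -> forall eps, 0 < eps -> exists delta, 0 < delta /\
  forall t, 0 <= t < delta -> forall p, inV r p -> Rabs (semigroup t g p - g p) < eps.
Proof.
  intros Hg eps He.
  destruct (res_approx_id g Hg (eps / 4)) as [e0 [He0 Hk]]; [lra|].
  set (eta := e0 / 2). assert (Heta : 0 < eta < e0) by (unfold eta; lra).
  set (f := res eta g).
  assert (HA := res_graph eta g (proj1 Heta) Hg). fold f in HA.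
  destruct (inC_bounded r _ r_le_1 (A_inC_r _ _ HA)) as [Mk [HMk Hbk]].
  exists (eps / 4 / (Mk + 1)). split; [apply Rdiv_lt_0_compat; lra|].
  intros t Ht p Hp.
  assert (H1 : Rabs (semigroup t g p - semigroup t f p) <= eps / 4).
  { apply semigroup_dist_of_euler; [exact Hg | exact (A_inC_l _ _ HA) | lra | exact Hp |].
    intros N. apply resn_dist; [apply mesh_pos | exact Hg | exact (A_inC_l _ _ HA) | | exact Hp].
    intros q Hq. rewrite Rabs_minus_sym. apply Hk; [exact Heta | exact Hq]. }
  pose proof (semigroup_dom_dist f _ Mk t ltac:(lra) HA Hbk p Hp) as H2.
  pose proof (Hk eta Heta p Hp) as H3. fold f in H3.
  pose proof (mul_lt_of_lt_div_succ t Mk (eps / 4) HMk ltac:(lra) Ht).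
  apply Rabs_le_between in H1, H2, H3. apply Rabs_def1; lra.
Qed.

Lemma resn_increment h f k p B : 0 < h -> A f k -> inV r p ->
  forall n, (forall j, (j < n)%nat -> Rabs (resn h (S j) k p - k p) <= B) ->
  Rabs (resn h n f p - f p - INR n * h * k p) <= INR n * h * B.
Proof.
  intros Hh HA Hp. induction n as [|n IH]; intros HB.
  - simpl. replace (f p - f p - 0 * h * k p) with 0 by ring. rewrite Rabs_R0. lra.
  - pose proof (IH ltac:(intros j Hj; apply HB; lia)).
    pose proof (HB n ltac:(lia)).
    rewrite (resn_succ_dom h n f k Hh HA p Hp), S_INR.
    replace (resn h n f p + h * resn h (S n) k p - f p - (INR n + 1) * h * k p)
      with ((resn h n f p - f p - INR n * h * k p) + h * (resn h (S n) k p - k p)) by ring.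
    eapply Rle_trans; [apply Rabs_triang|].
    rewrite Rabs_mult, (Rabs_pos_eq h) by lra.
    assert (h * Rabs (resn h (S n) k p - k p) <= h * B) by (apply Rmult_le_compat_l; lra).
    lra.
Qed.

Lemma resn_dist_near_dom h n k k' l e Ml : 0 < h -> inC r k -> A k' l -> bounded_by r l Ml ->
  (forall p, inV r p -> Rabs (k p - k' p) <= e) ->
  forall p, inV r p -> Rabs (resn h n k p - k p) <= 2 * e + INR n * h * Ml.
Proof.
  intros Hh Hk HA Hb Hkk p Hp.
  pose proof (resn_dist h n k k' e Hh Hk (A_inC_l _ _ HA) Hkk p Hp).
  pose proof (resn_dom_dist h n k' l Ml Hh HA Hb p Hp).
  pose proof (Hkk p Hp).
  replace (resn h n k p - k p)
    with ((resn h n k p - resn h n k' p) + (resn h n k' p - k' p) - (k p - k' p)) by ring.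
  apply Rabs_le_between in H, H0, H1. apply Rabs_le_between. lra.
Qed.

Lemma semigroup_dom_expansion f k k' l e Ml t : 0 <= t -> A f k -> A k' l ->
  bounded_by r l Ml -> (forall p, inV r p -> Rabs (k p - k' p) <= e) ->
  forall p, inV r p -> Rabs (semigroup t f p - f p - t * k p) <= t * (2 * e + t * Ml).
Proof.
  intros Ht HA Hk' Hb Hkk p Hp.
  assert (HMl := bounded_by_nonneg _ _ _ Hb).
  assert (He : 0 <= e) by (pose proof (Hkk p Hp); pose proof (Rabs_pos (k p - k' p)); lra).
  rewrite <- (Rminus_0_r (_ - _ - _)).
  apply (is_lim_seq_dist_le
           (fun N => euler N t f p - f p - INR (steps N t) * mesh N * k p)).
  - apply is_lim_seq_minus'; [apply is_lim_seq_minus'; [| apply is_lim_seq_const]|].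
    + apply euler_is_lim; [exact (A_inC_l _ _ HA) | exact Ht | exact Hp].
    + apply is_lim_seq_mult'; [apply grid_time_lim, Ht | apply is_lim_seq_const].
  - intros N. rewrite Rminus_0_r. unfold euler.
    set (h := mesh N). set (m := steps N t).
    assert (Hh : 0 < h) by apply mesh_pos.
    assert (Hmt : INR m * h <= t) by apply steps_spec, Ht.
    eapply Rle_trans.
    + apply (resn_increment h f k p (2 * e + t * Ml) Hh HA Hp m).
      intros j Hj. eapply Rle_trans.
      * exact (resn_dist_near_dom h (S j) k k' l e Ml Hh (A_inC_r _ _ HA) Hk' Hb Hkk p Hp).
      * assert (INR (S j) * h <= t).
        { eapply Rle_trans; [| exact Hmt]. apply Rmult_le_compat_r; [lra | apply le_INR; lia]. }
        assert (INR (S j) * h * Ml <= t * Ml) by (apply Rmult_le_compat_r; assumption). lra.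
    + apply Rmult_le_compat_r; [nra | exact Hmt].
Qed.

Lemma generator_of_A f k : A f k -> generator_graph r semigroup f k.
Proof.
  intros HA eps He.
  assert (Ck := A_inC_r _ _ HA).
  destruct (res_approx_id k Ck (eps / 8)) as [e0 [He0 Hk]]; [lra|].
  set (eta := e0 / 2). assert (Heta : 0 < eta < e0) by (unfold eta; lra).
  assert (Hk' := res_graph eta k (proj1 Heta) Ck).
  destruct (inC_bounded r _ r_le_1 (A_inC_r _ _ Hk')) as [Ml [HMl Hbl]].
  exists (eps / 4 / (Ml + 1)). split; [apply Rdiv_lt_0_compat; lra|].
  intros t [Ht Ht2] p Hp.
  pose proof (mul_lt_of_lt_div_succ t Ml (eps / 4) HMl ltac:(lra) ltac:(lra)).
  pose proof (semigroup_dom_expansion f k _ _ (eps / 8) Ml t ltac:(lra) HA Hk' Hbl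
                ltac:(intros q Hq; rewrite Rabs_minus_sym; apply Hk; [exact Heta | exact Hq]) p Hp)
    as Key.
  replace ((semigroup t f p - f p) / t - k p) with ((semigroup t f p - f p - t * k p) / t)
    by (field; lra).
  rewrite Rabs_div, (Rabs_pos_eq t) by lra.
  apply (Rmult_lt_reg_r t); [exact Ht|].
  replace (Rabs (semigroup t f p - f p - t * k p) / t * t)
    with (Rabs (semigroup t f p - f p - t * k p)) by (field; lra).
  apply Rle_lt_trans with (t * (2 * (eps / 8) + t * Ml)); [exact Key|].
  rewrite Rmult_comm. apply Rmult_lt_compat_r; lra.
Qed.

Lemma generator_lin f h g k a b : inC r f -> inC r g ->
  generator_graph r semigroup f h -> generator_graph r semigroup g k ->
  generator_graph r semigroup (fun p => a * f p + b * g p) (fun p => a * h p + b * k p).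
Proof.
  intros Hf Hg G1 G2 eps He.
  set (e' := eps / (2 * (Rabs a + Rabs b + 1))).
  assert (Hab : 0 <= Rabs a /\ 0 <= Rabs b) by (split; apply Rabs_pos).
  assert (He' : 0 < e') by (unfold e'; apply Rdiv_lt_0_compat; lra).
  destruct (G1 e' He') as [d1 [Hd1 H1]]. destruct (G2 e' He') as [d2 [Hd2 H2]].
  exists (Rmin d1 d2). split; [apply Rmin_pos; assumption|].
  intros t [Ht Ht2] p Hp.
  pose proof (Rmin_l d1 d2). pose proof (Rmin_r d1 d2).
  specialize (H1 t ltac:(lra) p Hp). specialize (H2 t ltac:(lra) p Hp).
  rewrite (semigroup_lin t f g a b ltac:(lra) Hf Hg p Hp).
  replace ((a * semigroup t f p + b * semigroup t g p - (a * f p + b * g p)) / t - (a * h p + b * k p))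
    with (a * ((semigroup t f p - f p) / t - h p) + b * ((semigroup t g p - g p) / t - k p))
    by (field; lra).
  eapply Rle_lt_trans; [apply Rabs_triang|]. rewrite !Rabs_mult.
  assert (Rabs a * Rabs ((semigroup t f p - f p) / t - h p) <= Rabs a * e')
    by (apply Rmult_le_compat_l; lra).
  assert (Rabs b * Rabs ((semigroup t g p - g p) / t - k p) <= Rabs b * e')
    by (apply Rmult_le_compat_l; lra).
  assert ((Rabs a + Rabs b) * e' < eps).
  { rewrite Rmult_comm. apply mul_lt_of_lt_div_succ; [lra | exact He |].
    split; [lra|]. unfold e'. apply Rmult_lt_compat_l; [exact He|].
    apply Rinv_lt_contravar; nra. }
  lra.
Qed.

Lemma generator_max_principle w w' p : inC r w -> generator_graph r semigroup w w' -> inV r p ->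
  (forall q, inV r q -> w q <= w p) -> w' p <= 0.
Proof.
  intros Hw G Hp Hmax. destruct (Rle_dec (w' p) 0) as [|Hn]; [assumption | exfalso].
  destruct (G (w' p / 2) ltac:(lra)) as [d [Hd Hd2]].
  specialize (Hd2 (d / 2) ltac:(lra) p Hp).
  assert (HT : semigroup (d / 2) w p <= w p).
  { pose proof (semigroup_nonneg (d / 2) (fun q => w p * 1 + (-1) * w q) ltac:(lra)
                  (inC_lin r _ _ _ _ (inC_const r 1) Hw)
                  ltac:(intros q Hq; specialize (Hmax q Hq); lra) p Hp) as H.
    rewrite (semigroup_lin (d / 2) (fun _ => 1) w (w p) (-1) ltac:(lra) (inC_const r 1) Hw p Hp),
            (semigroup_const (d / 2) 1 ltac:(lra) p Hp) in H.
    lra. }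
  assert ((semigroup (d / 2) w p - w p) / (d / 2) <= 0).
  { unfold Rdiv. apply Rmult_le_0_r; [lra | left; apply Rinv_0_lt_compat; lra]. }
  apply Rabs_def2 in Hd2. lra.
Qed.

(** [w = f - (I - A)^-1 (f - h)] satisfies [G w = w] for the generator [G], so the
    maximum principle for [G] forces [w = 0]. *)
Lemma A_of_generator f h : inC r f -> inC r h -> generator_graph r semigroup f h -> A f h.
Proof.
  intros Hf Hh G.
  set (g := fun p => 1 * f p + (-1) * h p).
  assert (Cg : inC r g) by (apply inC_lin; assumption).
  assert (HA := res_graph 1 g Rlt_0_1 Cg).
  set (u := res 1 g) in *. set (hu := fun p => (u p - g p) / 1) in *.
  assert (Cu : inC r u) by exact (A_inC_l _ _ HA).
  set (w := fun p => 1 * f p + -1 * u p).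
  assert (Cw : inC r w) by (apply inC_lin; assumption).
  assert (Gw := generator_lin f h u hu 1 (-1) Hf Cu G (generator_of_A u hu HA)).
  assert (Eww : forall p, 1 * h p + -1 * hu p = w p) by (intros p; unfold w, hu, g; field).
  assert (Gw' := generator_lin w _ w _ (-1) 0 Cw Cw Gw Gw).
  destruct (inC_attains_max r w r_le_1 Cw) as [p [Hp Hmax]].
  destruct (inC_attains_min r w r_le_1 Cw) as [q [Hq Hmin]].
  pose proof (generator_max_principle w _ p Cw Gw Hp Hmax) as M1.
  pose proof (generator_max_principle _ _ q (inC_lin r w w (-1) 0 Cw Cw) Gw' Hq
                ltac:(intros s Hs; specialize (Hmin s Hs); lra)) as M2.
  cbv beta in M1, M2. rewrite Eww in M1, M2.
  assert (W0 : forall s, inV r s -> w s = 0).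
  { intros s Hs. specialize (Hmax s Hs). specialize (Hmin s Hs). lra. }
  eapply A_ext; [exact HA | |].
  - intros s Hs. specialize (W0 s Hs). unfold w in W0. lra.
  - intros s Hs. specialize (W0 s Hs). rewrite <- (Eww s) in W0. lra.
Qed.

Theorem A_generates_Feller_semigroup : conservative_Feller_generator r A.
Proof.
  exists semigroup. split.
  - repeat split.
    + intros t f Ht Hf. apply semigroup_inC; assumption.
    + intros t f g a b Ht Hf Hg p Hp. apply semigroup_lin; assumption.
    + intros t f Ht Hf Hpos p Hp. apply semigroup_nonneg; assumption.
    + intros t Ht p Hp. apply semigroup_const; assumption.
    + intros f _ p Hp. apply semigroup_0, Hp.
    + intros s t f Hs Ht Hf p Hp. apply semigroup_add; assumption.
    + intros f Hf. apply semigroup_strong_cont, Hf.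
  - intros f h Hf Hh. split; [apply A_of_generator; assumption | apply generator_of_A].
Qed.

End FellerGeneration.

(** * The operator [A^I] *)

Lemma exp_le_1 z : z <= 0 -> exp z <= 1.
Proof.
  intros Hz. rewrite <- exp_0. destruct (Req_dec z 0) as [->|Hne]; [lra|].
  left. apply exp_increasing. lra.
Qed.

Section BoundaryLayer.

Variable r : R.
Hypothesis r_lt_1 : r < 1.
Variable eta : R.
Hypothesis eta_pos : 0 < eta.

Let q := exp (2 * (r - 1) / eta).

(** A boundary layer at [1] of width [eta]: [layer' r = 0], [layer' 1 = 1], and
    [layer = O(eta)] on [[r,1]]. *)
Definition layer (x : R) : R :=
  eta * (exp ((x - 1) / eta) + exp ((2 * r - x - 1) / eta)) / (1 - q).
Definition layer1 (x : R) : R :=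
  (exp ((x - 1) / eta) - exp ((2 * r - x - 1) / eta)) / (1 - q).
Definition layer2 (x : R) : R :=
  (exp ((x - 1) / eta) + exp ((2 * r - x - 1) / eta)) / (eta * (1 - q)).

Let q_lt_1 : q < 1.
Proof.
  unfold q. rewrite <- exp_0 at 2. apply exp_increasing.
  assert (0 < 2 * (1 - r) / eta) by (apply Rdiv_lt_0_compat; lra).
  replace (2 * (r - 1) / eta) with (- (2 * (1 - r) / eta)) by (field; lra). lra.
Qed.

Lemma layer_deriv x : is_derive layer x (layer1 x).
Proof.
  pose proof q_lt_1. unfold layer, layer1. auto_derive; [exact I|].
  replace ((x + - (1)) * / eta) with ((x - 1) / eta) by (field; lra).
  replace ((2 * r + - x + - (1)) * / eta) with ((2 * r - x - 1) / eta) by (field; lra).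
  field. lra.
Qed.

Lemma layer1_deriv x : is_derive layer1 x (layer2 x).
Proof.
  pose proof q_lt_1. unfold layer1, layer2. auto_derive; [exact I|].
  replace ((x + - (1)) * / eta) with ((x - 1) / eta) by (field; lra).
  replace ((2 * r + - x + - (1)) * / eta) with ((2 * r - x - 1) / eta) by (field; lra).
  field. lra.
Qed.

Lemma layer2_continuous x : continuous layer2 x.
Proof.
  pose proof q_lt_1. apply (@ex_derive_continuous R_AbsRing R_NormedModule).
  unfold layer2. auto_derive. exact I.
Qed.

Lemma layer1_r : layer1 r = 0.
Proof.
  unfold layer1. replace ((2 * r - r - 1) / eta) with ((r - 1) / eta) by (field; lra).
  rewrite Rminus_diag. unfold Rdiv. ring.
Qed.

Lemma layer1_1 : layer1 1 = 1.
Proof.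
  pose proof q_lt_1. unfold layer1.
  replace ((1 - 1) / eta) with 0 by (field; lra). rewrite exp_0.
  replace ((2 * r - 1 - 1) / eta) with (2 * (r - 1) / eta) by (field; lra). fold q.
  field. lra.
Qed.

Lemma layer_bounds x : eta <= 2 * (1 - r) -> Iv r x -> 0 <= layer x <= 4 * eta.
Proof.
  intros Heta Hx. unfold Iv in Hx.
  assert (Hq : q <= / 2).
  { unfold q. set (z := 2 * (1 - r) / eta).
    assert (Hz : 1 <= z) by (unfold z; apply (Rmult_le_reg_r eta); [lra | field_simplify; lra]).
    replace (2 * (r - 1) / eta) with (- z) by (unfold z; field; lra).
    rewrite exp_Ropp. pose proof (exp_ineq1 z ltac:(lra)). apply Rinv_le_contravar; lra. }
  pose proof (exp_pos (2 * (r - 1) / eta)) as Hq0. fold q in Hq0.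
  assert (E1 : exp ((x - 1) / eta) <= 1).
  { apply exp_le_1. unfold Rdiv. apply Rmult_le_0_r; [lra | left; apply Rinv_0_lt_compat; lra]. }
  assert (E2 : exp ((2 * r - x - 1) / eta) <= 1).
  { apply exp_le_1. unfold Rdiv. apply Rmult_le_0_r; [lra | left; apply Rinv_0_lt_compat; lra]. }
  pose proof (exp_pos ((x - 1) / eta)). pose proof (exp_pos ((2 * r - x - 1) / eta)).
  assert (Hinv : 0 < / (1 - q) <= 2).
  { split; [apply Rinv_0_lt_compat; lra|].
    replace 2 with (/ (/ 2)) by field. apply Rinv_le_contravar; lra. }
  unfold layer. set (S := exp ((x - 1) / eta) + exp ((2 * r - x - 1) / eta)) in *.
  assert (0 <= S <= 2) by (unfold S; lra).
  change (0 <= eta * S * / (1 - q) <= 4 * eta).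
  assert (S * / (1 - q) <= 4) by nra.
  split; [apply Rmult_le_pos; [apply Rmult_le_pos|]; lra | nra].
Qed.

End BoundaryLayer.

Section OperatorAI.

Variables r kappa alpha beta : R.
Hypothesis r_bounds : 0 < r < 1.
Hypothesis kappa_pos : 0 < kappa.
Hypothesis alpha_nonneg : 0 <= alpha.
Hypothesis beta_nonneg : 0 <= beta.

Let Iv_1 : Iv r 1. Proof. unfold Iv; lra. Qed.

Lemma AI_inC f h : AI r kappa alpha beta f h -> inC r f /\ inC r h.
Proof.
  intros [Hf [g1 [g2 [[_ [_ [Hc1 Hc2]]] [_ [_ [_ H2]]]]]]].
  split; [exact Hf|].
  eapply cont_on_I_ext; [intros x Hx; symmetry; apply H2, Hx|].
  apply cont_on_I_plus; apply cont_on_I_mult; try assumption;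
    repeat apply cont_on_I_mult; try apply cont_on_I_const; apply cont_on_I_id.
Qed.

Lemma AI_ext f h f' h' : AI r kappa alpha beta f h -> eq_on_V r f f' -> eq_on_V r h h' ->
  AI r kappa alpha beta f' h'.
Proof.
  intros [Hf [g1 [g2 [[Hd1 HC2] [B1 [B2 [H1 H2]]]]]]] E1 E2.
  split; [eapply inC_ext; eassumption|].
  exists g1, g2. repeat split; try apply HC2.
  - eapply deriv_on_I_ext; [intros x Hx; apply (E1 (VL x) Hx) | intros; reflexivity | exact Hd1].
  - exact B1.
  - rewrite <- (E1 VPlus I), <- (E1 (VL 1) Iv_1). exact B2.
  - rewrite <- (E2 VPlus I), <- (E1 VPlus I), <- (E1 (VL 1) Iv_1). exact H1.
  - intros x Hx. rewrite <- (E2 (VL x) Hx). apply H2, Hx.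
Qed.

Lemma AI_lin f h g k a b : AI r kappa alpha beta f h -> AI r kappa alpha beta g k ->
  AI r kappa alpha beta (fun p => a * f p + b * g p) (fun p => a * h p + b * k p).
Proof.
  intros [Hf [f1 [f2 [[Hd1 [Hd2 [Hc1 Hc2]]] [B1 [B2 [H1 H2]]]]]]]
         [Hg [g1 [g2 [[Kd1 [Kd2 [Kc1 Kc2]]] [C1 [C2 [K1 K2]]]]]]].
  split; [apply inC_lin; assumption|].
  exists (fun x => a * f1 x + b * g1 x), (fun x => a * f2 x + b * g2 x).
  repeat split.
  - exact (deriv_on_I_lin r (fun x => f (VL x)) (fun x => g (VL x)) _ _ a b Hd1 Kd1).
  - apply deriv_on_I_lin; assumption.
  - apply cont_on_I_lin; assumption.
  - apply cont_on_I_lin; assumption.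
  - rewrite B1, C1. ring.
  - rewrite B2, C2. ring.
  - rewrite H1, K1. ring.
  - intros x Hx. rewrite H2, K2 by exact Hx. ring.
Qed.

Lemma AI_one : AI r kappa alpha beta (fun _ => 1) (fun _ => 0).
Proof.
  split; [apply inC_const|].
  exists (fun _ => 0), (fun _ => 0). repeat split.
  - exact (deriv_on_I_const r 1).
  - apply deriv_on_I_const.
  - apply cont_on_I_const.
  - apply cont_on_I_const.
  - ring.
  - ring.
  - intros; ring.
Qed.

(** The positive maximum principle: at an interior maximum [f' = 0] and [f'' <= 0];
    at [r] the Neumann condition gives [f' = 0]; at [1-] the condition
    [f'(1-) = beta (f(1+) - f(1-)) <= 0] and [f'(1-) >= 0] force [f'(1-) = 0]. *)
Lemma AI_max_principle f h p : AI r kappa alpha beta f h -> inV r p ->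
  (forall q, inV r q -> f q <= f p) -> h p <= 0.
Proof.
  intros [Hf [g1 [g2 [HC2 [B1 [B2 [H1 H2]]]]]]] Hp Hmax.
  destruct HC2 as [Hd1 HC2'].
  destruct p as [x|].
  - rewrite H2 by exact Hp.
    assert (Hm : forall y, Iv r y -> f (VL y) <= f (VL x)) by (intros y Hy; apply (Hmax (VL y)), Hy).
    assert (Hx : Iv r x) by exact Hp.
    destruct (Rlt_dec x 1) as [Hx1|Hx1].
    + assert (G1 : g1 x = 0).
      { destruct (Req_dec x r) as [->|Hne]; [exact B1|].
        pose proof (deriv_nonpos_at_max r _ _ x Hd1 Hx Hx1 Hm).
        pose proof (deriv_nonneg_at_max r _ _ x Hd1 Hx ltac:(unfold Iv in Hx; lra) Hm). lra. }
      pose proof (second_deriv_nonpos_at_max r _ g1 g2 x (conj Hd1 HC2') Hx Hx1 G1 Hm).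
      rewrite G1. assert (0 <= kappa * x ^ 2) by (apply Rmult_le_pos; [lra | apply pow2_ge_0]).
      nra.
    + assert (x = 1) by (unfold Iv in Hx; lra). subst x.
      pose proof (deriv_nonneg_at_max r _ _ 1 Hd1 Iv_1 ltac:(lra) Hm).
      pose proof (Hmax VPlus I).
      assert (g1 1 <= 0) by (rewrite B2; apply Rmult_le_0_l; lra).
      assert (G1 : g1 1 = 0) by lra.
      pose proof (second_deriv_nonpos_at_max_1 r _ g1 g2 ltac:(lra) (conj Hd1 HC2') G1 Hm).
      rewrite G1. nra.
  - rewrite H1. pose proof (Hmax (VL 1) Iv_1).
    replace (- alpha * f VPlus + alpha * f (VL 1)) with (alpha * (f (VL 1) - f VPlus)) by ring.
    apply Rmult_le_0_l; lra.
Qed.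

Lemma AI_of_smooth (F F1 F2 : R -> R) c :
  (forall x, Iv r x -> is_derive F x (F1 x)) -> (forall x, Iv r x -> is_derive F1 x (F2 x)) ->
  (forall x, Iv r x -> continuous F2 x) -> F1 r = 0 -> F1 1 = beta * (c - F 1) ->
  AI r kappa alpha beta (fun p => match p with VL x => F x | VPlus => c end)
    (fun p => match p with
              | VL x => kappa * x ^ 2 * F2 x + kappa * x * F1 x
              | VPlus => - alpha * c + alpha * F 1
              end).
Proof.
  intros HF HF1 HF2 Hr0 H1.
  split; [apply cont_on_I_of_ex_derive; intros x Hx; exists (F1 x); apply HF, Hx|].
  exists F1, F2. repeat split; try assumption.
  - apply deriv_on_I_of_is_derive, HF.
  - apply deriv_on_I_of_is_derive, HF1.
  - apply cont_on_I_of_ex_derive. intros x Hx. exists (F2 x). apply HF1, Hx.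
  - apply cont_on_I_of_continuous, HF2.
Qed.

Lemma AI_closure_of_smooth (e : Vpt -> R) (E1 E2 : R -> R) :
  (forall x, is_derive (fun y => e (VL y)) x (E1 x)) -> (forall x, is_derive E1 x (E2 x)) ->
  (forall x, continuous E2 x) -> E1 r = 0 -> in_dom_closure r (AI r kappa alpha beta) e.
Proof.
  intros HE1 HE2 HE3 Hr0 eps Heps.
  set (D0 := Rabs (beta * (e VPlus - e (VL 1)) - E1 1)).
  assert (HD0 : 0 <= D0) by apply Rabs_pos.
  set (eta := Rmin (2 * (1 - r)) (eps / (8 * (D0 + 1)))).
  assert (Heps' : 0 < eps / (D0 + 1)) by (apply Rdiv_lt_0_compat; lra).
  assert (Heta : 0 < eta) by (apply Rmin_pos; [lra | apply Rdiv_lt_0_compat; lra]).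
  assert (Heta1 : eta <= 2 * (1 - r)) by apply Rmin_l.
  assert (Heta2 : 4 * eta < eps / (D0 + 1)).
  { assert (eta <= eps / (D0 + 1) / 8).
    { replace (eps / (D0 + 1) / 8) with (eps / (8 * (D0 + 1))) by (field; lra). apply Rmin_r. }
    lra. }
  pose proof (layer_bounds r ltac:(lra) eta Heta 1 Heta1 Iv_1) as Hl1.
  assert (Hden : 1 <= 1 + beta * layer r eta 1) by nra.
  (* the multiple of the boundary layer that restores the boundary condition at [1-] *)
  set (d := (beta * (e VPlus - e (VL 1)) - E1 1) / (1 + beta * layer r eta 1)).
  assert (Hd : Rabs d <= D0).
  { unfold d. rewrite Rabs_div, (Rabs_pos_eq (1 + _)) by lra. fold D0.
    apply Rmult_le_reg_r with (1 + beta * layer r eta 1); [lra|].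
    field_simplify; [nra | lra]. }
  exists (fun p => match p with VL x => e (VL x) + d * layer r eta x | VPlus => e VPlus end).
  eexists. split.
  - apply (AI_of_smooth _ (fun x => E1 x + d * layer1 r eta x)
                          (fun x => E2 x + d * layer2 r eta x)).
    + intros x _. apply (is_derive_plus (fun y => e (VL y)) (fun y => d * layer r eta y));
        [apply HE1 | apply is_derive_scal; apply layer_deriv; lra].
    + intros x _. apply (is_derive_plus E1 (fun y => d * layer1 r eta y));
        [apply HE2 | apply is_derive_scal; apply layer1_deriv; lra].
    + intros x _. apply (continuous_plus E2 (fun y => d * layer2 r eta y)); [apply HE3|].
      apply (continuous_scal_r d (layer2 r eta)); apply layer2_continuous; lra.
    + rewrite Hr0, layer1_r by lra. ring.
    + rewrite layer1_1 by lra. unfold d. field. lra.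
  - intros [x|] Hp; [| rewrite Rminus_diag, Rabs_R0; lra].
    replace (e (VL x) + d * layer r eta x - e (VL x)) with (d * layer r eta x) by ring.
    pose proof (layer_bounds r ltac:(lra) eta Heta x Heta1 Hp) as Hlx.
    rewrite Rabs_mult, (Rabs_pos_eq (layer r eta x)) by lra.
    pose proof (mul_lt_of_lt_div_succ (4 * eta) D0 eps HD0 Heps ltac:(lra)).
    apply Rle_trans with (D0 * (4 * eta)); [apply Rmult_le_compat; try lra; apply Rabs_pos | lra].
Qed.

Lemma AI_closure_shifted_pow n : (2 <= n)%nat ->
  in_dom_closure r (AI r kappa alpha beta) (shifted_pow r n).
Proof.
  intros Hn.
  apply (AI_closure_of_smooth _ (fun x => INR n * (x - r) ^ pred n)
           (fun x => INR n * (INR (pred n) * (x - r) ^ pred (pred n)))).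
  - intros x. unfold shifted_pow. auto_derive; [exact I | unfold Rminus; ring].
  - intros x. auto_derive; [exact I | unfold Rminus; ring].
  - intros x. apply (@ex_derive_continuous R_AbsRing R_NormedModule). auto_derive. exact I.
  - rewrite Rminus_diag, pow_i by lia. ring.
Qed.

Lemma AI_closure_ind_plus : in_dom_closure r (AI r kappa alpha beta) ind_plus.
Proof.
  apply (AI_closure_of_smooth _ (fun _ => 0) (fun _ => 0)).
  - intros x. exact (is_derive_const 0 x).
  - intros x. exact (is_derive_const 0 x).
  - intros x. apply continuous_const.
  - reflexivity.
Qed.

End OperatorAI.

Section ResolventAI.

Variables r kappa alpha beta : R.
Hypothesis r_bounds : 0 < r < 1.
Hypothesis kappa_pos : 0 < kappa.
Hypothesis alpha_nonneg : 0 <= alpha.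
Hypothesis beta_nonneg : 0 <= beta.
Variable eta : R.
Hypothesis eta_pos : 0 < eta.
Variable g : Vpt -> R.
Hypothesis g_inC : inC r g.

(** In the variable [y = ln x], [u - eta A u = g] on [[r,1-]] becomes the constant
    coefficient equation [U'' = a^2 (U - G)] on [[ln r, 0]], with [a^2 = 1 / (eta kappa)]. *)
Let lo := ln r.
Let a := / sqrt (eta * kappa).
Let G (y : R) := g (VL (clamp r (exp y))).

(** Variation of constants, starting from [lo]: [Up] is the particular solution,
    [Hh = cosh (a (y - lo))] the homogeneous one with [Hh' lo = 0]. *)
Let Jp (x : R) := RInt (fun y => exp (a * y) * G y) lo x.
Let Jm (x : R) := RInt (fun y => exp (- a * y) * G y) lo x.
Let Up (x : R) := - (a / 2) * (exp (a * x) * Jm x - exp (- a * x) * Jp x).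
Let Up1 (x : R) := - (a ^ 2 / 2) * (exp (a * x) * Jm x + exp (- a * x) * Jp x).
Let Hh (x : R) := (exp (a * (x - lo)) + exp (- a * (x - lo))) / 2.
Let Hh1 (x : R) := a * (exp (a * (x - lo)) - exp (- a * (x - lo))) / 2.

Let a_pos : 0 < a.
Proof. unfold a. apply Rinv_0_lt_compat, sqrt_lt_R0. nra. Qed.

Let kappa_a2 : kappa * a ^ 2 = / eta.
Proof.
  unfold a. rewrite pow_inv.
  simpl. rewrite Rmult_1_r, sqrt_sqrt by nra. field. lra.
Qed.

Let lo_neg : lo < 0.
Proof. unfold lo. rewrite <- ln_1. apply ln_increasing; lra. Qed.

Let G_continuous y : continuous G y.
Proof.
  unfold G. apply (continuous_comp exp (fun z => g (VL (clamp r z)))).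
  - apply (@ex_derive_continuous R_AbsRing R_NormedModule). auto_derive. exact I.
  - apply (continuous_clamp r (fun z => g (VL z))); [lra | exact g_inC].
Qed.

Let integrand_side s x : ex_RInt (fun y => exp (s * y) * G y) lo x /\
  locally x (fun x0 => continuity_pt (fun x1 => exp (s * x1) * G x1) x0).
Proof.
  assert (C : forall y, continuous (fun y => exp (s * y) * G y) y).
  { intros y. apply (continuous_mult (fun y => exp (s * y)) G); [| apply G_continuous].
    apply (@ex_derive_continuous R_AbsRing R_NormedModule). auto_derive. exact I. }
  split.
  - apply (@ex_RInt_continuous R_CompleteNormedModule). intros z _. apply C.
  - apply filter_forall. intros y. apply continuity_pt_filterlim, C.
Qed.

Let Jp_deriv x : is_derive Jp x (exp (a * x) * G x).
Proof.
  unfold Jp. auto_derive; [| ring].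
  destruct (integrand_side a x). repeat split; assumption.
Qed.

Let Jm_deriv x : is_derive Jm x (exp (- a * x) * G x).
Proof.
  unfold Jm. auto_derive; [| ring].
  destruct (integrand_side (- a) x). repeat split; assumption.
Qed.

Let Up_deriv x : is_derive Up x (Up1 x).
Proof.
  unfold Up, Up1. auto_derive; [repeat split; eexists; [apply Jm_deriv | apply Jp_deriv]|].
  replace (Derive (fun y => Jm y) x) with (exp (- a * x) * G x)
    by (symmetry; apply is_derive_unique, Jm_deriv).
  replace (Derive (fun y => Jp y) x) with (exp (a * x) * G x)
    by (symmetry; apply is_derive_unique, Jp_deriv).
  field.
Qed.

Let Up1_deriv x : is_derive Up1 x (a ^ 2 * (Up x - G x)).
Proof.
  unfold Up, Up1. auto_derive; [repeat split; eexists; [apply Jm_deriv | apply Jp_deriv]|].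
  replace (Derive (fun y => Jm y) x) with (exp (- a * x) * G x)
    by (symmetry; apply is_derive_unique, Jm_deriv).
  replace (Derive (fun y => Jp y) x) with (exp (a * x) * G x)
    by (symmetry; apply is_derive_unique, Jp_deriv).
  replace (exp (- a * x)) with (/ exp (a * x)) by (rewrite <- exp_Ropp; f_equal; ring).
  pose proof (exp_pos (a * x)). field. lra.
Qed.

Let Hh_deriv x : is_derive Hh x (Hh1 x).
Proof. unfold Hh, Hh1. auto_derive; [exact I | unfold Rminus; field]. Qed.

Let Hh1_deriv x : is_derive Hh1 x (a ^ 2 * Hh x).
Proof. unfold Hh, Hh1. auto_derive; [exact I | unfold Rminus; field]. Qed.

(** The coefficient of [Hh] is fixed by the boundary condition at [1-], after
    eliminating the value [cp] at [1+] through [cp - eta alpha (Uf 0 - cp) = g(1+)]. *)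
Let dd := 1 + eta * alpha.
Let coef := (beta * (g VPlus - Up 0) / dd - Up1 0) / (Hh1 0 + beta * Hh 0 / dd).
Let Uf (x : R) := coef * Hh x + Up x.
Let U1 (x : R) := coef * Hh1 x + Up1 x.
Let U2 (x : R) := a ^ 2 * (Uf x - G x).
Let cp := (g VPlus + eta * alpha * Uf 0) / dd.

Let Uf_deriv x : is_derive Uf x (U1 x).
Proof. apply (is_derive_plus (fun x => coef * Hh x) Up x); [apply is_derive_scal |]; auto. Qed.

Let U1_deriv x : is_derive U1 x (U2 x).
Proof.
  apply (is_derive_ext_loc (fun x => coef * Hh1 x + Up1 x)); [apply filter_forall; reflexivity|].
  eapply is_derive_ext; [intros; reflexivity|].
  replace (U2 x) with (coef * (a ^ 2 * Hh x) + a ^ 2 * (Up x - G x)) by (unfold U2, Uf; ring).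
  apply (is_derive_plus (fun x => coef * Hh1 x) Up1 x); [apply is_derive_scal |]; auto.
Qed.

Let U1_lo : U1 lo = 0.
Proof.
  unfold U1, Hh1, Up1, Jp, Jm. rewrite !RInt_point, Rminus_diag, !Rmult_0_r, exp_0.
  unfold zero; simpl. field.
Qed.

Let U1_0 : U1 0 = beta * (cp - Uf 0).
Proof.
  assert (Hdd : 0 < dd) by (unfold dd; nra).
  assert (Hh0 : 0 < Hh 0).
  { unfold Hh. pose proof (exp_pos (a * (0 - lo))). pose proof (exp_pos (- a * (0 - lo))). lra. }
  assert (Hh10 : 0 < Hh1 0).
  { unfold Hh1. assert (exp (- a * (0 - lo)) < exp (a * (0 - lo))) by (apply exp_increasing; nra).
    assert (0 < a * (exp (a * (0 - lo)) - exp (- a * (0 - lo)))) by (apply Rmult_lt_0_compat; lra).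
    lra. }
  assert (0 < Hh1 0 * dd + beta * Hh 0) by nra.
  unfold U1, cp, Uf, coef, dd in *. clearbody Up Up1. field. split; [lra | nra].
Qed.

Let ln_deriv x : 0 < x -> is_derive ln x (/ x).
Proof. intros Hx. auto_derive; [lra | field; lra]. Qed.

Let U2_continuous y : continuous U2 y.
Proof.
  apply (continuous_mult (fun _ => a ^ 2) (fun y => Uf y - G y)); [apply continuous_const|].
  apply (continuous_plus Uf (fun y => - G y)); [| apply (continuous_opp G), G_continuous].
  apply (@ex_derive_continuous R_AbsRing R_NormedModule). exists (U1 y). apply Uf_deriv.
Qed.

Let sol_deriv x : 0 < x -> is_derive (fun x => Uf (ln x)) x (U1 (ln x) / x).
Proof.
  intros Hx. replace (U1 (ln x) / x) with (/ x * U1 (ln x)) by (field; lra).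
  apply (is_derive_comp Uf ln); [apply Uf_deriv | apply ln_deriv, Hx].
Qed.

Let sol1_deriv x : 0 < x ->
  is_derive (fun x => U1 (ln x) / x) x ((U2 (ln x) - U1 (ln x)) / x ^ 2).
Proof.
  intros Hx. apply (is_derive_ext (fun t => U1 (ln t) * / t)); [reflexivity|].
  replace ((U2 (ln x) - U1 (ln x)) / x ^ 2)
    with ((/ x * U2 (ln x)) * / x + U1 (ln x) * (- / x ^ 2)) by (field; lra).
  apply (is_derive_mult (fun t => U1 (ln t)) (fun t => / t));
    [apply (is_derive_comp U1 ln); [apply U1_deriv | apply ln_deriv, Hx] | | intros; apply Rmult_comm].
  auto_derive; [lra | field; lra].
Qed.

Let sol2_continuous x : 0 < x -> continuous (fun x => (U2 (ln x) - U1 (ln x)) / x ^ 2) x.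
Proof.
  intros Hx.
  assert (Cln : continuous ln x).
  { apply (@ex_derive_continuous R_AbsRing R_NormedModule). exists (/ x). apply ln_deriv, Hx. }
  assert (CU1 : continuous U1 (ln x)).
  { apply (@ex_derive_continuous R_AbsRing R_NormedModule). exists (U2 (ln x)). apply U1_deriv. }
  pose proof (U2_continuous (ln x)) as CU2.
  clearbody U1 U2.
  apply (continuous_ext (fun t => (U2 (ln t) + (-1) * U1 (ln t)) * / t ^ 2));
    [intros t; change ((U2 (ln t) + (-1) * U1 (ln t)) * / t ^ 2 = (U2 (ln t) - U1 (ln t)) / t ^ 2);
     unfold Rdiv; ring|].
  apply (continuous_mult (fun t => U2 (ln t) + (-1) * U1 (ln t)) (fun t => / t ^ 2)).
  - apply (continuous_plus (fun t => U2 (ln t)) (fun t => (-1) * U1 (ln t))).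
    + apply (continuous_comp ln U2); assumption.
    + apply (continuous_mult (fun _ => -1) (fun t => U1 (ln t))); [apply continuous_const|].
      apply (continuous_comp ln U1); assumption.
  - apply (@ex_derive_continuous R_AbsRing R_NormedModule). auto_derive. nra.
Qed.

Lemma AI_resolvent_solution : exists u h, AI r kappa alpha beta u h /\
  forall p, inV r p -> u p - eta * h p = g p.
Proof.
  assert (Hpos : forall x, Iv r x -> 0 < x) by (intros x Hx; unfold Iv in Hx; lra).
  assert (B1 : U1 (ln r) / r = 0) by (fold lo; rewrite U1_lo; field; lra).
  assert (B2 : U1 (ln 1) / 1 = beta * (cp - Uf (ln 1))) by (rewrite ln_1, U1_0; field).
  pose proof (AI_of_smooth r kappa alpha beta _ _ _ cp
                (fun x Hx => sol_deriv x (Hpos x Hx)) (fun x Hx => sol1_deriv x (Hpos x Hx))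
                (fun x Hx => sol2_continuous x (Hpos x Hx)) B1 B2) as HAI.
  set (u := fun p => match p with VL x => Uf (ln x) | VPlus => cp end).
  exists u, (fun p => (u p - g p) / eta). split; [| intros p _; field; lra].
  apply (AI_ext r kappa alpha beta r_bounds _ _ _ _ HAI); [intros p _; reflexivity|].
  intros [x|] Hp; unfold u.
  - assert (Hx : Iv r x) by exact Hp. pose proof (Hpos x Hx).
    replace (kappa * x ^ 2 * ((U2 (ln x) - U1 (ln x)) / x ^ 2) + kappa * x * (U1 (ln x) / x))
      with (kappa * U2 (ln x)) by (field; lra).
    unfold U2. rewrite <- Rmult_assoc, kappa_a2. unfold G. rewrite exp_ln, clamp_id by assumption.
    clearbody Uf. field. lra.
  - rewrite ln_1. unfold cp, dd. field. nra.
Qed.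

End ResolventAI.

Theorem proposition7p5 (r kappa alpha beta : R) :
  0 < r < 1 -> 0 < kappa -> 0 <= alpha -> 0 <= beta ->
  conservative_Feller_generator r (AI r kappa alpha beta).
Proof.
  intros Hr Hk Ha Hb.
  apply (A_generates_Feller_semigroup r ltac:(lra) ltac:(lra)).
  - apply AI_inC.
  - apply AI_ext, Hr.
  - apply AI_lin.
  - apply AI_one.
  - apply AI_max_principle; assumption.
  - apply AI_resolvent_solution; assumption.
  - apply AI_closure_shifted_pow; try assumption; lia.
  - apply AI_closure_shifted_pow; try assumption; lia.
  - apply AI_closure_ind_plus; assumption.
Qed.
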